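(* Let $(\omega,c)\in\mathbb{R}^2$ satisfy: $\omega>c^2/4$, or $\omega=c^2/4$ and $c>0$. Let $$\alpha_0=\tfrac13\bigl(4c+\sqrt{48\omega+4c^2}\bigr),\qquad A(x)=-3x^2+8cx+64\omega,\qquad L_0=L_0(\omega,c)=\frac{2\pi}{\sqrt{\alpha_0\sqrt{A(\alpha_0)}}}.$$ Assume $L_0<L<\infty$. Then there exists a positive single-bump solution $\Phi^L_{\omega,c}$ of $$-\Phi''+\Bigl(\omega-\frac{c^2}{4}\Bigr)\Phi+\frac c2|\Phi|^2\Phi-\frac3{16}|\Phi|^4\Phi=0,\qquad x\in\mathbb{T}_{2L},$$ such that $\Phi^L_{\omega,c}(x)\to\Phi_{\omega,c}(x)$ for every $x\in\mathbb{R}$ as $L\to\infty$. Moreover $\Phi^L_{\omega,c}$ is explicitly given by $$\bigl(\Phi^L_{\omega,c}(x)\bigr)^2=\eta_3\,\frac{\mathrm{dn}^2\!\left(\frac{x}{2g};k\right)}{1+\beta^2\,\mathrm{sn}^2\!\left(\frac{x}{2g};k\right)},\qquad x\in[-L,L],$$ for some parameters $\eta_3>0$, $g>0$, $k\in(0,1)$, $\beta\in\mathbb{R}$ depending on $(L,\omega,c)$.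
   Context: $\mathbb{T}_{2L}=\mathbb{R}/2L\mathbb{Z}\simeq[-L,L]$ is the torus of length $2L$. $\Phi_{\omega,c}$ is the positive even function on $\mathbb{R}$ given by $\Phi_{\omega,c}^2(x)=\dfrac{4\omega-c^2}{\sqrt{\omega}\bigl(\cosh(\sqrt{4\omega-c^2}\,x)-\frac{c}{2\sqrt\omega}\bigr)}$ if $\omega>c^2/4$, and $\Phi_{\omega,c}^2(x)=\dfrac{4c}{(cx)^2+1}$ if $\omega=c^2/4$, $c>0$ (the soliton profile on the whole line). A positive single-bump solution on $\mathbb{T}_{2L}$ means a positive $2L$-periodic solution which (up to translation) attains its maximum at $x=0$, is even, and is strictly decreasing on $(0,L)$, attaining its minimum at $x=L$ (one bump per period). $\mathrm{sn}(\cdot;k)$, $\mathrm{dn}(\cdot;k)$ are the Jacobi elliptic functions with modulus $k$: if $u=\int_0^\varphi(1-k^2\sin^2\theta)^{-1/2}d\theta$ then $\mathrm{sn}(u;k)=\sin\varphi$, $\mathrm{dn}(u;k)=\sqrt{1-k^2\mathrm{sn}^2(u;k)}$. The quantity $A(\alpha_0)$ is positive under the hypothesis on $(\omega,c)$. *)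

From Stdlib Require Import Reals Lra ClassicalEpsilon.
From Coquelicot Require Import Coquelicot.
Open Scope R_scope.

Definition ellF (k phi : R) : R :=
  RInt (fun th => / sqrt (1 - k ^ 2 * (sin th) ^ 2)) 0 phi.

(* Jacobi amplitude: am(u;k) is the phi with F(phi;k) = u
   (unique for 0 <= k < 1, since F(.;k) is an increasing bijection of R). *)
Definition jam (u k : R) : R :=
  epsilon (inhabits 0) (fun phi => ellF k phi = u).

Definition jsn (u k : R) : R := sin (jam u k).
Definition jdn (u k : R) : R := sqrt (1 - k ^ 2 * (jsn u k) ^ 2).

Definition soliton (om c x : R) : R :=
  if Rlt_dec (c ^ 2 / 4) om then
    sqrt ((4 * om - c ^ 2) /
          (sqrt om * (cosh (sqrt (4 * om - c ^ 2) * x) - c / (2 * sqrt om))))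
  else sqrt (4 * c / ((c * x) ^ 2 + 1)).

Definition alpha0 (om c : R) : R := / 3 * (4 * c + sqrt (48 * om + 4 * c ^ 2)).
Definition Afun (om c x : R) : R := - 3 * x ^ 2 + 8 * c * x + 64 * om.
Definition L0 (om c : R) : R :=
  2 * PI / sqrt (alpha0 om c * sqrt (Afun om c (alpha0 om c))).

Definition solves_ode (om c : R) (Phi : R -> R) : Prop :=
  exists Phi1 Phi2 : R -> R,
    forall x, is_derive Phi x (Phi1 x) /\ is_derive Phi1 x (Phi2 x) /\
      - Phi2 x + (om - c ^ 2 / 4) * Phi x + c / 2 * (Rabs (Phi x)) ^ 2 * Phi x
        - 3 / 16 * (Rabs (Phi x)) ^ 4 * Phi x = 0.

Definition pos_single_bump_solution (om c L : R) (Phi : R -> R) : Prop :=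
  solves_ode om c Phi /\
  (forall x, Phi (x + 2 * L) = Phi x) /\
  (forall x, 0 < Phi x) /\
  (forall x, Phi (- x) = Phi x) /\
  (forall x, Phi x <= Phi 0) /\
  (forall x, Phi L <= Phi x) /\
  (forall x y, 0 < x -> x < y -> y < L -> Phi y < Phi x).

(* Writing Phi^2 = eta3 dn^2 / (1 + beta^2 sn^2) at x / (2 g), the equation becomes a
   polynomial identity in sn^2 of degree two.  Its coefficients vanish when eta1 < p < eta3 are
   the roots of the cubic with eta1 + p + eta3 = 4 c and
   eta1 p + eta1 eta3 + p eta3 = 16 (c^2/4 - om), and k^2, beta^2, g^2 are explicit rational
   functions of the roots.  For 0 < p < alpha0 this is a single bump of half-period
   L(p) = 2 g K(k).  L is continuous, lies below 2 pi / sqrt (p sqrt (A p)), which tends to L0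
   as p -> alpha0, and tends to +oo as p -> 0+ (because k -> 1 if om > c^2/4, and g -> +oo if
   om = c^2/4).  Hence every L > L0 is some L(p_L), and p_L -> 0 as L -> +oo.  As p -> 0+ the
   profile converges to the soliton: for om > c^2/4 since sn (., k) tends to tanh = sin o gd,
   for om = c^2/4 since sn (x / (2 g)) ~ x / (2 g) with g beta bounded. *)

From Stdlib Require Import Reals Lra ClassicalEpsilon Ranalysis5.
From Coquelicot Require Import Coquelicot.
Open Scope R_scope.
Set Bullet Behavior "Strict Subproofs".

Lemma sin_sqr_bounds t : 0 <= sin t ^ 2 <= 1.
Proof. pose proof (SIN_bound t). split; [apply pow2_ge_0 | nra]. Qed.

Lemma cos_sqr t : cos t ^ 2 = 1 - sin t ^ 2.
Proof. pose proof (sin2_cos2 t). unfold Rsqr in *. nra. Qed.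

Lemma one_add_sqr_pos b s : 0 < 1 + b ^ 2 * s ^ 2.
Proof. pose proof (pow2_ge_0 b). pose proof (pow2_ge_0 s). nra. Qed.

Lemma continuous_of_ex_derive (f : R -> R) x : ex_derive f x -> continuous f x.
Proof. apply (ex_derive_continuous (K := R_AbsRing) (V := R_NormedModule)). Qed.

Lemma is_derive_comp_mult (f h : R -> R) x df dh l :
  is_derive f (h x) df -> is_derive h x dh -> l = df * dh -> is_derive (fun y => f (h y)) x l.
Proof.
  intros Hf Hh ->. rewrite Rmult_comm. exact (is_derive_comp f h x df dh Hf Hh).
Qed.

Lemma inv_sqrt_sub_le m a b : 0 < m <= 1 -> m <= a <= 1 -> m <= b <= 1 ->
  Rabs (/ sqrt a - / sqrt b) <= Rabs (a - b) / m ^ 2.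
Proof.
  intros Hm Ha Hb.
  assert (0 < sqrt m) by (apply sqrt_lt_R0; lra).
  assert (sqrt m <= sqrt a) by (apply sqrt_le_1_alt; lra).
  assert (sqrt m <= sqrt b) by (apply sqrt_le_1_alt; lra).
  assert (sqrt m <= 1) by (rewrite <- sqrt_1; apply sqrt_le_1_alt; lra).
  assert (Hsm := pow2_sqrt m ltac:(lra)).
  assert (HA := pow2_sqrt a ltac:(lra)). assert (HB := pow2_sqrt b ltac:(lra)).
  set (x := sqrt a) in *. set (y := sqrt b) in *. set (s := sqrt m) in *.
  assert (0 < x * y * (x + y)) by (repeat apply Rmult_lt_0_compat; lra).
  replace (/ x - / y) with (- (a - b) / (x * y * (x + y)))
    by (rewrite <- HA, <- HB; field; repeat split; lra).
  rewrite Rabs_div, Rabs_Ropp, (Rabs_right (x * y * (x + y))) by lra.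
  apply Rmult_le_compat_l; [apply Rabs_pos|]. apply Rinv_le_contravar; [nra|].
  assert (m * m <= s * s * (s + s)) by nra.
  assert (s * s * (s + s) <= x * y * (x + y)) by (apply Rmult_le_compat; nra).
  nra.
Qed.

Section FilterLimits.

Context {T : Type} {F : (T -> Prop) -> Prop} {FF : Filter F}.

Lemma flim_abs_lt (f : T -> R) a : filterlim f F (locally a) ->
  forall eps, 0 < eps -> F (fun x => Rabs (f x - a) < eps).
Proof. intros H eps Heps. exact (proj1 (filterlim_locally f a) H (mkposreal eps Heps)). Qed.

Lemma flim_of_abs_lt (f : T -> R) a :
  (forall eps, 0 < eps -> F (fun x => Rabs (f x - a) < eps)) -> filterlim f F (locally a).
Proof. intros H. apply filterlim_locally => eps. apply (H eps (cond_pos eps)). Qed.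

Lemma flim_continuous (h : R -> R) (f : T -> R) a :
  continuous h a -> filterlim f F (locally a) -> filterlim (fun x => h (f x)) F (locally (h a)).
Proof. intros Hh Hf. exact (filterlim_comp _ _ _ f h F _ _ Hf Hh). Qed.

Lemma flim_plus (f g : T -> R) a b : filterlim f F (locally a) -> filterlim g F (locally b) ->
  filterlim (fun x => f x + g x) F (locally (a + b)).
Proof.
  intros Hf Hg. eapply filterlim_comp_2; [exact Hf | exact Hg |].
  apply (filterlim_plus (K := R_AbsRing) (V := R_NormedModule) a b).
Qed.

Lemma flim_mult (f g : T -> R) a b : filterlim f F (locally a) -> filterlim g F (locally b) ->
  filterlim (fun x => f x * g x) F (locally (a * b)).
Proof.
  intros Hf Hg. eapply filterlim_comp_2; [exact Hf | exact Hg |].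
  apply (filterlim_mult (K := R_AbsRing) a b).
Qed.

Lemma flim_minus (f g : T -> R) a b : filterlim f F (locally a) -> filterlim g F (locally b) ->
  filterlim (fun x => f x - g x) F (locally (a - b)).
Proof.
  intros Hf Hg. apply flim_plus; [exact Hf|].
  apply (flim_continuous Ropp); [|exact Hg].
  apply continuous_of_ex_derive. auto_derive. exact I.
Qed.

Lemma flim_div (f g : T -> R) a b : b <> 0 ->
  filterlim f F (locally a) -> filterlim g F (locally b) ->
  filterlim (fun x => f x / g x) F (locally (a / b)).
Proof.
  intros Hb Hf Hg. apply flim_mult; [exact Hf|].
  apply (flim_continuous Rinv); [|exact Hg].
  apply continuous_of_ex_derive. auto_derive. exact Hb.
Qed.

Lemma flim_sqr (f : T -> R) a :
  filterlim f F (locally a) -> filterlim (fun x => f x ^ 2) F (locally (a ^ 2)).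
Proof.
  intros Hf. apply (flim_continuous (fun y => y ^ 2)); [|exact Hf].
  apply continuous_of_ex_derive. auto_derive. exact I.
Qed.

Lemma flim_squeeze (f g : T -> R) l :
  F (fun x => Rabs (f x - l) <= g x) -> filterlim g F (locally 0) -> filterlim f F (locally l).
Proof.
  intros H Hg. apply flim_of_abs_lt => eps Heps.
  generalize (filter_and _ _ H (flim_abs_lt g 0 Hg eps Heps)). apply filter_imp.
  intros x [A B]. rewrite Rminus_0_r in B. pose proof (Rle_abs (g x)). lra.
Qed.

End FilterLimits.

Lemma flim_at_right (f : R -> R) a : continuous f a -> filterlim f (at_right a) (locally (f a)).
Proof. intros H. eapply filterlim_filter_le_1; [apply filter_le_within | exact H]. Qed.

Lemma flim_at_left (f : R -> R) a : continuous f a -> filterlim f (at_left a) (locally (f a)).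
Proof. intros H. eapply filterlim_filter_le_1; [apply filter_le_within | exact H]. Qed.

Lemma at_right_interval a b : a < b -> at_right a (fun p => a < p < b).
Proof.
  intros Hab. exists (mkposreal (b - a) ltac:(lra)). intros y Hy Hay. split; [exact Hay|].
  unfold ball in Hy; simpl in Hy; unfold AbsRing_ball, abs, minus, plus, opp in Hy; simpl in Hy.
  apply Rabs_def2 in Hy. lra.
Qed.

Lemma at_left_interval a b : a < b -> at_left b (fun p => a < p < b).
Proof.
  intros Hab. exists (mkposreal (b - a) ltac:(lra)). intros y Hy Hyb. split; [|exact Hyb].
  unfold ball in Hy; simpl in Hy; unfold AbsRing_ball, abs, minus, plus, opp in Hy; simpl in Hy.
  apply Rabs_def2 in Hy. lra.
Qed.

(** * The elliptic integral and the amplitude *)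

Definition ell_integrand (k t : R) : R := / sqrt (1 - k ^ 2 * sin t ^ 2).

Lemma ell_integrand_continuous k t :
  0 < 1 - k ^ 2 * sin t ^ 2 -> continuous (ell_integrand k) t.
Proof.
  intros. apply continuous_of_ex_derive. unfold ell_integrand; auto_derive.
  repeat split; [lra | apply Rgt_not_eq, sqrt_lt_R0; lra].
Qed.

Lemma ellF_0 k : ellF k 0 = 0.
Proof. unfold ellF. rewrite RInt_point. reflexivity. Qed.

Section EllipticIntegral.

Variable k : R.
Hypothesis Hk : k ^ 2 < 1.

Lemma ell_radicand_pos t : 0 < 1 - k ^ 2 * sin t ^ 2.
Proof. pose proof (sin_sqr_bounds t). pose proof (pow2_ge_0 k). nra. Qed.

Lemma ex_RInt_ell_integrand a b : ex_RInt (ell_integrand k) a b.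
Proof.
  apply (ex_RInt_continuous (V := R_CompleteNormedModule)).
  intros; apply ell_integrand_continuous, ell_radicand_pos.
Qed.

Lemma ell_integrand_bounds t : 1 <= ell_integrand k t <= / sqrt (1 - k ^ 2).
Proof.
  pose proof (ell_radicand_pos t). pose proof (sin_sqr_bounds t). pose proof (pow2_ge_0 k).
  unfold ell_integrand. split.
  - rewrite <- Rinv_1 at 1. apply Rinv_le_contravar; [apply sqrt_lt_R0; lra|].
    rewrite <- sqrt_1 at 2. apply sqrt_le_1_alt. nra.
  - apply Rinv_le_contravar; [apply sqrt_lt_R0; lra|]. apply sqrt_le_1_alt. nra.
Qed.

Lemma ellF_derive phi : is_derive (ellF k) phi (ell_integrand k phi).
Proof.
  apply (is_derive_RInt (ell_integrand k) (ellF k) 0 phi).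
  - apply filter_forall => x. apply (RInt_correct (V := R_CompleteNormedModule)).
    apply ex_RInt_ell_integrand.
  - apply ell_integrand_continuous, ell_radicand_pos.
Qed.

Lemma ellF_continuity : continuity (ellF k).
Proof.
  intros phi. apply continuity_pt_filterlim, continuous_of_ex_derive.
  eexists; apply ellF_derive.
Qed.

Lemma ellF_sub a b : ellF k b - ellF k a = RInt (ell_integrand k) a b.
Proof.
  unfold ellF; fold (ell_integrand k).
  rewrite <- (RInt_Chasles (ell_integrand k) 0 a b); try apply ex_RInt_ell_integrand.
  change plus with Rplus; simpl; ring.
Qed.

Lemma ellF_sub_bounds a b :
  a <= b -> b - a <= ellF k b - ellF k a <= (b - a) / sqrt (1 - k ^ 2).
Proof.
  intros Hab. rewrite ellF_sub.
  assert (Hcst : forall m : R, @eq R (RInt (fun _ => m) a b) ((b - a) * m))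
    by (intros; rewrite RInt_const; reflexivity).
  split.
  - rewrite <- (Rmult_1_r (b - a)), <- Hcst.
    apply RInt_le; auto using ex_RInt_const, ex_RInt_ell_integrand.
    intros; apply ell_integrand_bounds.
  - unfold Rdiv. rewrite <- Hcst.
    apply RInt_le; auto using ex_RInt_const, ex_RInt_ell_integrand.
    intros; apply ell_integrand_bounds.
Qed.

Lemma ellF_lt a b : a < b -> ellF k a < ellF k b.
Proof. intros. pose proof (ellF_sub_bounds a b ltac:(lra)). lra. Qed.

Lemma ellF_le a b : a <= b -> ellF k a <= ellF k b.
Proof. intros Hab. pose proof (ellF_sub_bounds a b Hab). lra. Qed.

Lemma ellF_opp phi : ellF k (- phi) = - ellF k phi.
Proof.
  unfold ellF; fold (ell_integrand k).
  assert (E := RInt_comp_lin (ell_integrand k) (-1) 0 0 phi).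
  rewrite !Rmult_0_r, !Rplus_0_l, Rplus_0_r in E.
  replace (-1 * phi) with (- phi) in E by ring.
  rewrite <- E by apply ex_RInt_ell_integrand.
  transitivity (opp (RInt (ell_integrand k) 0 phi)); [|reflexivity].
  rewrite <- RInt_opp by apply ex_RInt_ell_integrand.
  apply RInt_ext => t _. change scal with Rmult; change opp with Ropp; simpl.
  unfold ell_integrand. replace (-1 * t + 0) with (- t) by ring. rewrite sin_neg.
  replace ((- sin t) ^ 2) with (sin t ^ 2) by ring. ring.
Qed.

Lemma ellF_add_PI phi : ellF k (phi + PI) = ellF k phi + ellF k PI.
Proof.
  assert (E := RInt_comp_lin (ell_integrand k) 1 PI 0 phi).
  replace (1 * 0 + PI) with PI in E by ring. replace (1 * phi + PI) with (phi + PI) in E by ring.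
  assert (ellF k (phi + PI) - ellF k PI = ellF k phi); [|lra].
  rewrite ellF_sub, <- E by apply ex_RInt_ell_integrand.
  apply RInt_ext => t _. change scal with Rmult; change mult with Rmult; simpl.
  unfold ell_integrand. replace (1 * t + PI) with (t + PI) by ring. rewrite neg_sin.
  rewrite Rmult_1_l. do 2 f_equal. ring.
Qed.

Lemma ellF_PI2 : ellF k (PI / 2) = ellF k PI / 2.
Proof.
  assert (E := ellF_add_PI (- (PI / 2))).
  rewrite ellF_opp in E. replace (- (PI / 2) + PI) with (PI / 2) in E by field. lra.
Qed.

Lemma jam_ellF u : ellF k (jam u k) = u.
Proof.
  unfold jam. apply epsilon_spec.
  destruct (IVT_gen (ellF k) (- Rabs u) (Rabs u) u ellF_continuity) as [phi [_ Hphi]].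
  - pose proof (ellF_sub_bounds 0 (Rabs u) (Rabs_pos u)). rewrite ellF_opp, ellF_0 in *.
    unfold Rmin, Rmax. destruct (Rle_dec _ _); split; unfold Rabs in *;
      destruct (Rcase_abs u); lra.
  - exists phi; exact Hphi.
Qed.

Lemma jam_eq u phi : ellF k phi = u -> jam u k = phi.
Proof.
  intros E. pose proof (jam_ellF u).
  destruct (Rtotal_order (jam u k) phi) as [h|[h|h]]; auto;
    apply ellF_lt in h; lra.
Qed.

Lemma jam_sub_bounds u v : u <= v -> 0 <= jam v k - jam u k <= v - u.
Proof.
  intros Huv. pose proof (jam_ellF u). pose proof (jam_ellF v).
  destruct (Rle_lt_dec (jam u k) (jam v k)) as [h|h].
  - pose proof (ellF_sub_bounds _ _ h). lra.
  - apply ellF_lt in h. lra.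
Qed.

Lemma jam_lt u v : u < v -> jam u k < jam v k.
Proof.
  intros Huv. pose proof (jam_ellF u). pose proof (jam_ellF v).
  destruct (Rlt_le_dec (jam u k) (jam v k)) as [h|h]; auto.
  apply ellF_le in h. lra.
Qed.

Lemma jam_0 : jam 0 k = 0.
Proof. apply jam_eq, ellF_0. Qed.

Lemma jam_opp u : jam (- u) k = - jam u k.
Proof. apply jam_eq. rewrite ellF_opp, jam_ellF. reflexivity. Qed.

Lemma jam_add_period u : jam (u + ellF k PI) k = jam u k + PI.
Proof. apply jam_eq. rewrite ellF_add_PI, jam_ellF. reflexivity. Qed.

Lemma jam_half_period : jam (ellF k PI / 2) k = PI / 2.
Proof. apply jam_eq, ellF_PI2. Qed.

Lemma jam_continuity_pt u : continuity_pt (fun v => jam v k) u.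
Proof.
  intros eps Heps. exists eps. split; auto. intros v [_ Hv]. simpl in *. unfold R_dist in *.
  destruct (Rle_dec u v) as [h|h].
  - pose proof (jam_sub_bounds u v h).
    rewrite Rabs_right in Hv by lra. rewrite Rabs_right; lra.
  - pose proof (jam_sub_bounds v u ltac:(lra)).
    rewrite Rabs_left in Hv by lra. rewrite Rabs_left1; lra.
Qed.

Lemma jam_derive u :
  is_derive (fun v => jam v k) u (sqrt (1 - k ^ 2 * sin (jam u k) ^ 2)).
Proof.
  pose (derF := fun a (_ : jam (u - 1) k <= a <= jam (u + 1) k) =>
    exist (fun l => derivable_pt_abs (ellF k) a l) (ell_integrand k a)
      (proj1 (is_derive_Reals _ _ _) (ellF_derive a))).
  assert (Hu : jam (u - 1) k <= jam u k <= jam (u + 1) k)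
    by (split; apply Rlt_le, jam_lt; lra).
  apply is_derive_Reals.
  pose proof (ell_radicand_pos (jam u k)).
  assert (0 < sqrt (1 - k ^ 2 * sin (jam u k) ^ 2)) by (apply sqrt_lt_R0; lra).
  replace (sqrt _) with (1 / derive_pt (ellF k) (jam u k) (derF (jam u k) Hu)).
  - apply (derivable_pt_lim_recip_interv (ellF k) (fun v => jam v k) (u - 1) (u + 1) u derF
      (jam_continuity_pt u) ltac:(lra) ltac:(lra) Hu).
    + intros; apply jam_ellF.
    + change (derive_pt _ _ _) with (ell_integrand k (jam u k)).
      apply Rgt_not_eq, Rinv_0_lt_compat. lra.
  - change (derive_pt _ _ _) with (ell_integrand k (jam u k)).
    unfold ell_integrand. field. lra.
Qed.

End EllipticIntegral.

(** * Comparison with the modulus k = 1 *)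

Definition gd (v : R) : R := atan (sinh v).

Lemma cosh_pos v : 0 < cosh v.
Proof. unfold cosh. pose proof (exp_pos v). pose proof (exp_pos (- v)). lra. Qed.

Lemma sqrt_one_add_sinh_sqr v : sqrt (1 + sinh v ^ 2) = cosh v.
Proof.
  replace (1 + sinh v ^ 2) with (cosh v ^ 2).
  - apply sqrt_pow2, Rlt_le, cosh_pos.
  - unfold cosh, sinh. rewrite exp_Ropp. pose proof (exp_pos v). field. lra.
Qed.

Lemma sin_gd v : sin (gd v) = sinh v / cosh v.
Proof.
  unfold gd. rewrite sin_atan, <- sqrt_one_add_sinh_sqr. unfold Rsqr.
  replace (sinh v ^ 2) with (sinh v * sinh v) by ring. reflexivity.
Qed.

Lemma cos_gd v : cos (gd v) = 1 / cosh v.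
Proof.
  unfold gd. rewrite cos_atan, <- sqrt_one_add_sinh_sqr. unfold Rsqr.
  replace (sinh v ^ 2) with (sinh v * sinh v) by ring. reflexivity.
Qed.

Lemma gd_bounds v : 0 <= v -> 0 <= gd v < PI / 2.
Proof.
  intros Hv. unfold gd. split; [|pose proof (atan_bound (sinh v)); lra].
  rewrite <- atan_0. destruct Hv as [Hv|<-]; [|rewrite sinh_0; lra].
  left. apply atan_increasing. unfold sinh. pose proof (exp_increasing (- v) v ltac:(lra)). lra.
Qed.

Lemma ell_radicand_1 t : 1 - 1 ^ 2 * sin t ^ 2 = cos t ^ 2.
Proof. rewrite cos_sqr. ring. Qed.

Lemma ellF_1 th : 0 <= th < PI / 2 -> ellF 1 th = ln ((1 + sin th) / cos th).
Proof.
  intros Hth. pose proof PI_RGT_0.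
  assert (Hcos : forall t, 0 <= t <= th -> 0 < cos t) by (intros; apply cos_gt_0; lra).
  assert (Hsin : forall t, 0 <= t <= th -> 0 <= sin t) by (intros; apply sin_ge_0; lra).
  assert (E : @eq R (minus (ln ((1 + sin th) / cos th)) (ln ((1 + sin 0) / cos 0)))
                     (ln ((1 + sin th) / cos th))).
  { rewrite sin_0, cos_0, Rplus_0_r, Rdiv_1, ln_1. change minus with Rminus. ring. }
  apply is_RInt_unique. rewrite <- E.
  apply (is_RInt_derive (V := R_CompleteNormedModule) (fun t => ln ((1 + sin t) / cos t)));
    rewrite Rmin_left, Rmax_right by lra.
  - intros t Ht. pose proof (Hcos t Ht). pose proof (Hsin t Ht). auto_derive.
    + repeat split; try lra. apply Rdiv_lt_0_compat; lra.
    + rewrite ell_radicand_1, sqrt_pow2 by lra.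
      transitivity ((cos t ^ 2 + sin t + sin t ^ 2) / (cos t * (1 + sin t)));
        [|rewrite cos_sqr]; field; lra.
  - intros t Ht. apply ell_integrand_continuous. rewrite ell_radicand_1.
    apply pow_lt, Hcos, Ht.
Qed.

Lemma ellF_1_gd v : 0 <= v -> ellF 1 (gd v) = v.
Proof.
  intros Hv. rewrite ellF_1 by (apply gd_bounds, Hv).
  rewrite sin_gd, cos_gd. pose proof (cosh_pos v).
  replace ((1 + sinh v / cosh v) / (1 / cosh v)) with (cosh v + sinh v) by (field; lra).
  replace (cosh v + sinh v) with (exp v) by (unfold cosh, sinh; field).
  apply ln_exp.
Qed.

Lemma ell_integrand_sub_le k k' m t : 0 < m <= 1 ->
  m <= 1 - k ^ 2 * sin t ^ 2 -> m <= 1 - k' ^ 2 * sin t ^ 2 ->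
  Rabs (ell_integrand k t - ell_integrand k' t) <= Rabs (k ^ 2 - k' ^ 2) / m ^ 2.
Proof.
  intros Hm Ha Hb. pose proof (sin_sqr_bounds t).
  pose proof (pow2_ge_0 k). pose proof (pow2_ge_0 k').
  eapply Rle_trans; [apply (inv_sqrt_sub_le m); split; nra|].
  replace (1 - k ^ 2 * sin t ^ 2 - (1 - k' ^ 2 * sin t ^ 2)) with (- (k ^ 2 - k' ^ 2) * sin t ^ 2)
    by ring.
  rewrite Rabs_mult, Rabs_Ropp, (Rabs_right (sin t ^ 2)) by lra.
  apply Rmult_le_compat_r; [apply Rlt_le, Rinv_0_lt_compat, pow_lt; lra|].
  pose proof (Rabs_pos (k ^ 2 - k' ^ 2)). nra.
Qed.

Lemma ellF_1_sub_bounds k th : k ^ 2 < 1 -> 0 <= th < PI / 2 ->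
  0 <= ellF 1 th - ellF k th <= th * (1 - k ^ 2) / cos th ^ 4.
Proof.
  intros Hk Hth. pose proof PI_RGT_0. pose proof (pow2_ge_0 k).
  assert (0 < cos th) by (apply cos_gt_0; lra).
  assert (Hm : forall t, 0 <= t <= th ->
            cos th ^ 2 <= 1 - 1 ^ 2 * sin t ^ 2 <= 1 - k ^ 2 * sin t ^ 2).
  { intros t Ht. assert (0 <= sin t <= sin th) by (split; [apply sin_ge_0 | apply sin_incr_1]; lra).
    rewrite ell_radicand_1, !cos_sqr. pose proof (sin_sqr_bounds t). nra. }
  assert (Hpt : forall t, 0 <= t <= th ->
            0 <= ell_integrand 1 t - ell_integrand k t <= (1 - k ^ 2) / cos th ^ 4).
  { intros t Ht. destruct (Hm t Ht) as [Hm1 Hm2]. assert (0 < cos th ^ 2) by nra.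
    assert (ell_integrand k t <= ell_integrand 1 t).
    { apply Rinv_le_contravar; [apply sqrt_lt_R0; lra | apply sqrt_le_1_alt; lra]. }
    assert (Hl := ell_integrand_sub_le 1 k (cos th ^ 2) t).
    rewrite Rabs_right, Rabs_right, <- pow_mult in Hl by (rewrite ?pow1; lra).
    rewrite pow1 in Hl. split; [lra|]. apply Hl; try lra.
    split; [lra|]. rewrite cos_sqr. pose proof (sin_sqr_bounds th). lra. }
  assert (Hex1 : ex_RInt (ell_integrand 1) 0 th).
  { apply (ex_RInt_continuous (V := R_CompleteNormedModule)). intros t Ht.
    rewrite Rmin_left, Rmax_right in Ht by lra. apply ell_integrand_continuous.
    destruct (Hm t Ht). nra. }
  assert (Hexk := ex_RInt_ell_integrand k Hk 0 th).
  unfold ellF; fold (ell_integrand 1) (ell_integrand k).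
  rewrite <- (RInt_minus (V := R_CompleteNormedModule)) by assumption. change minus with Rminus.
  assert (Hcst : forall c, @eq R (RInt (fun _ => c) 0 th) (th * c))
    by (intros; rewrite RInt_const; change scal with Rmult; simpl; ring).
  assert (Hexd : ex_RInt (fun t => ell_integrand 1 t - ell_integrand k t) 0 th)
    by (apply (ex_RInt_minus (V := R_NormedModule)); assumption).
  split.
  - replace 0 with (th * 0) at 1 by ring. rewrite <- Hcst.
    apply RInt_le; auto using ex_RInt_const; [lra|]. intros; apply Hpt; lra.
  - replace (th * (1 - k ^ 2) / cos th ^ 4) with (th * ((1 - k ^ 2) / cos th ^ 4))
      by (field; lra).
    rewrite <- Hcst. apply RInt_le; auto using ex_RInt_const; [lra|]. intros; apply Hpt; lra.
Qed.

Lemma jam_near_gd k v v0 eps : k ^ 2 < 1 -> 0 <= v0 -> Rabs (v - v0) < eps / 2 ->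
  gd v0 * (1 - k ^ 2) / cos (gd v0) ^ 4 < eps / 2 -> Rabs (jam v k - gd v0) < eps.
Proof.
  intros Hk Hv0 Hv Hsmall. apply Rabs_def2 in Hv.
  destruct (gd_bounds v0 Hv0) as [Hth0 Hth1].
  pose proof (ellF_1_sub_bounds k (gd v0) Hk (conj Hth0 Hth1)) as Hcmp.
  rewrite ellF_1_gd in Hcmp by exact Hv0.
  pose proof (jam_ellF k Hk v). set (th := jam v k) in *.
  apply Rabs_def1.
  - destruct (Rlt_le_dec th (gd v0 + eps)) as [h|h]; [lra|].
    pose proof (ellF_sub_bounds k Hk (gd v0) (gd v0 + eps) ltac:(lra)).
    pose proof (ellF_le k Hk _ _ h). lra.
  - destruct (Rlt_le_dec (gd v0 - eps) th) as [h|h]; [lra|].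
    pose proof (ellF_sub_bounds k Hk (gd v0 - eps) (gd v0) ltac:(lra)).
    pose proof (ellF_le k Hk _ _ h). lra.
Qed.

Section ModulusToOne.

Context {T : Type} {F : (T -> Prop) -> Prop} {FF : Filter F}.
Variable kk : T -> R.
Hypotheses (Hkk : filterlim (fun x => kk x ^ 2) F (locally 1)) (Hkk1 : F (fun x => kk x ^ 2 < 1)).

Lemma eventually_small_modulus_defect th : 0 <= th < PI / 2 -> forall eps, 0 < eps ->
  F (fun x => kk x ^ 2 < 1 /\ th * (1 - kk x ^ 2) / cos th ^ 4 < eps).
Proof.
  intros Hth eps Heps. pose proof PI_RGT_0.
  assert (0 < cos th) by (apply cos_gt_0; lra).
  set (C := th / cos th ^ 4 + 1).
  assert (HC : 0 <= th / cos th ^ 4) by (apply Rdiv_le_0_compat; [lra | apply pow_lt; lra]).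
  assert (0 < C) by (unfold C; lra).
  assert (HeC : 0 < eps / C) by (apply Rdiv_lt_0_compat; lra).
  generalize (filter_and _ _ Hkk1 (flim_abs_lt _ _ Hkk (eps / C) HeC)).
  apply filter_imp => x [Hk Hx]. split; [exact Hk|].
  rewrite Rabs_left in Hx by lra.
  assert ((1 - kk x ^ 2) * C < eps).
  { apply (Rmult_lt_compat_r C) in Hx; [|lra]. unfold Rdiv in Hx.
    rewrite Rmult_assoc, Rinv_l, Rmult_1_r in Hx by lra. lra. }
  unfold C in *. unfold Rdiv in *. nra.
Qed.

Lemma jam_tends_to_gd (v : T -> R) v0 : 0 <= v0 -> filterlim v F (locally v0) ->
  filterlim (fun x => jam (v x) (kk x)) F (locally (gd v0)).
Proof.
  intros Hv0 Hv. apply flim_of_abs_lt => eps Heps. assert (Heps2 : 0 < eps / 2) by lra.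
  generalize (filter_and _ _ (flim_abs_lt v v0 Hv (eps / 2) Heps2)
    (eventually_small_modulus_defect (gd v0) (gd_bounds v0 Hv0) (eps / 2) Heps2)).
  apply filter_imp => x [Hx [Hk Hsmall]]. apply jam_near_gd; assumption.
Qed.

Lemma ellF_PI_eventually_gt M : F (fun x => M < ellF (kk x) PI).
Proof.
  pose proof PI_RGT_0. pose proof (Rle_abs M).
  set (V := Rabs M + 1). assert (0 <= V) by (pose proof (Rabs_pos M); unfold V; lra).
  destruct (gd_bounds V ltac:(assumption)) as [Hth0 Hth1].
  generalize (eventually_small_modulus_defect (gd V) (conj Hth0 Hth1) 1 ltac:(lra)).
  apply filter_imp => x [Hk Hsmall].
  pose proof (ellF_1_sub_bounds (kk x) (gd V) Hk (conj Hth0 Hth1)) as Hcmp.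
  rewrite ellF_1_gd in Hcmp by assumption.
  pose proof (ellF_le (kk x) Hk (gd V) PI ltac:(lra)). unfold V in *. lra.
Qed.

End ModulusToOne.

Lemma ellF_PI_continuous k0 : k0 ^ 2 < 1 -> continuous (fun k => ellF k PI) k0.
Proof.
  intros Hk0. pose proof PI_RGT_0. pose proof (pow2_ge_0 k0).
  set (m := (1 - k0 ^ 2) / 2).
  assert (Hsq : continuous (fun k => k ^ 2) k0)
    by (apply continuous_of_ex_derive; auto_derive; exact I).
  apply (flim_squeeze _ (fun k => PI * Rabs (k ^ 2 - k0 ^ 2) / m ^ 2)).
  - generalize (flim_abs_lt _ _ Hsq m ltac:(unfold m; lra)).
    apply filter_imp => k Hk. apply Rabs_def2 in Hk.
    assert (Hk2 : k ^ 2 < 1) by (unfold m in Hk; lra).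
    unfold ellF; fold (ell_integrand k) (ell_integrand k0).
    rewrite <- (RInt_minus (V := R_CompleteNormedModule)) by auto using ex_RInt_ell_integrand.
    change minus with Rminus.
    replace (PI * _ / _) with ((PI - 0) * (Rabs (k ^ 2 - k0 ^ 2) / m ^ 2))
      by (field; unfold m; lra).
    apply abs_RInt_le_const; [lra | |].
    + apply (ex_RInt_minus (V := R_NormedModule)); auto using ex_RInt_ell_integrand.
    + intros t _. pose proof (sin_sqr_bounds t). pose proof (pow2_ge_0 k).
      apply ell_integrand_sub_le; unfold m in *; nra.
  - replace 0 with (PI * Rabs (k0 ^ 2 - k0 ^ 2) / m ^ 2)
      by (rewrite Rminus_eq_0, Rabs_R0; field; unfold m; lra).
    apply flim_div; [apply pow_nonzero; unfold m; lra | | apply filterlim_const].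
    apply flim_mult; [apply filterlim_const|].
    apply (flim_continuous Rabs); [apply continuous_Rabs|].
    apply flim_minus; [exact Hsq | apply filterlim_const].
Qed.

Lemma sin_jam_bounds k v : k ^ 2 < 1 -> 0 <= v < 1 -> v / (1 + v) <= sin (jam v k) <= v.
Proof.
  intros Hk Hv. pose proof PI_RGT_0. pose proof PI2_1.
  pose proof (jam_sub_bounds k Hk 0 v ltac:(lra)) as Hth. rewrite jam_0 in Hth by exact Hk.
  pose proof (jam_ellF k Hk v). set (th := jam v k) in *.
  assert (Hc : 0 < cos th) by (apply cos_gt_0; lra).
  assert (Hs0 : 0 <= sin th) by (apply sin_ge_0; lra).
  assert (Hst : sin th <= th).
  { destruct (Req_dec th 0) as [E|E]; [rewrite E, sin_0; lra | left; apply sin_lt_x; lra]. }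
  split; [|lra].
  (* v = F_k(th) <= F_1(th) = ln ((1 + sin th) / cos th), and 1 + v <= exp v *)
  assert (Hle := proj1 (ellF_1_sub_bounds k th Hk ltac:(lra))).
  rewrite ellF_1 in Hle by lra.
  assert (HY : 0 < (1 + sin th) / cos th) by (apply Rdiv_lt_0_compat; lra).
  assert (Hexp : exp v <= (1 + sin th) / cos th).
  { rewrite <- (exp_ln _ HY). destruct (Req_dec v (ln ((1 + sin th) / cos th))) as [E|E].
    - rewrite E. lra.
    - left. apply exp_increasing. lra. }
  pose proof (exp_ineq1_le v) as He.
  set (E := exp v) in *. set (s := sin th) in *.
  assert (HC := cos_sqr th). fold s in HC.
  assert (H1c : E * cos th <= 1 + s).
  { apply (Rmult_le_compat_r (cos th)) in Hexp; [|lra].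
    unfold Rdiv in Hexp. rewrite Rmult_assoc, Rinv_l, Rmult_1_r in Hexp by lra. lra. }
  assert (Hsq : E ^ 2 * (1 - s ^ 2) <= (1 + s) ^ 2).
  { rewrite <- HC, <- Rpow_mult_distr. apply pow_incr. split; [|exact H1c].
    apply Rmult_le_pos; lra. }
  assert (Hs1 : s < 1) by (assert (0 < cos th ^ 2) by (apply pow_lt; lra); nra).
  assert (H3 : E ^ 2 * (1 - s) <= 1 + s).
  { apply (Rmult_le_reg_r (1 + s)); [lra|].
    replace (E ^ 2 * (1 - s) * (1 + s)) with (E ^ 2 * (1 - s ^ 2)) by ring. nra. }
  assert (H4 : (1 + v) ^ 2 <= E ^ 2) by (apply pow_incr; lra).
  apply (Rmult_le_reg_r (1 + v)); [lra|].
  replace (v / (1 + v) * (1 + v)) with v by (field; lra). nra.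
Qed.

(** * The elliptic profile *)

Definition sn2_ratio (k b s : R) : R := (1 - k ^ 2 * s) / (1 + b ^ 2 * s).

Lemma sn2_ratio_pos k b s : k ^ 2 < 1 -> 0 <= s <= 1 -> 0 < sn2_ratio k b s.
Proof.
  intros. unfold sn2_ratio. pose proof (pow2_ge_0 k). pose proof (pow2_ge_0 b).
  apply Rdiv_lt_0_compat; nra.
Qed.

Lemma sn2_ratio_sub k b s1 s2 : 0 <= s1 -> 0 <= s2 ->
  sn2_ratio k b s1 - sn2_ratio k b s2
  = (s2 - s1) * (k ^ 2 + b ^ 2) / ((1 + b ^ 2 * s1) * (1 + b ^ 2 * s2)).
Proof.
  intros. pose proof (pow2_ge_0 b). unfold sn2_ratio. field. split; nra.
Qed.

Lemma sn2_ratio_lt k b s1 s2 : 0 < k ^ 2 + b ^ 2 -> 0 <= s1 < s2 ->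
  sn2_ratio k b s2 < sn2_ratio k b s1.
Proof.
  intros. pose proof (pow2_ge_0 b).
  assert (0 < sn2_ratio k b s1 - sn2_ratio k b s2); [|lra].
  rewrite sn2_ratio_sub by lra.
  apply Rdiv_lt_0_compat; apply Rmult_lt_0_compat; nra.
Qed.

Lemma sn2_ratio_le k b s1 s2 : 0 < k ^ 2 + b ^ 2 -> 0 <= s1 <= s2 ->
  sn2_ratio k b s2 <= sn2_ratio k b s1.
Proof.
  intros Hkb [Hs1 [Hs12|<-]]; [apply Rlt_le, sn2_ratio_lt; lra | lra].
Qed.

Definition phase (k g x : R) : R := jam (x / (2 * g)) k.

Definition elliptic_profile (e k b g x : R) : R :=
  sqrt e * jdn (x / (2 * g)) k / sqrt (1 + b ^ 2 * jsn (x / (2 * g)) k ^ 2).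

Definition ode_coef0 om c e k b g :=
  (k ^ 2 + b ^ 2) / (4 * g ^ 2) + (om - c ^ 2 / 4) + c * e / 2 - 3 * e ^ 2 / 16.
Definition ode_coef1 om c e k b g :=
  -2 * (1 + b ^ 2) * ((k ^ 2 + b ^ 2) / (4 * g ^ 2)) + 2 * (om - c ^ 2 / 4) * b ^ 2
  + c * e * (b ^ 2 - k ^ 2) / 2 + 3 * e ^ 2 * k ^ 2 / 8.
Definition ode_coef2 om c e k b g :=
  b ^ 2 * ((k ^ 2 + b ^ 2) / (4 * g ^ 2)) + (om - c ^ 2 / 4) * b ^ 4
  - c * e * k ^ 2 * b ^ 2 / 2 - 3 * e ^ 2 * k ^ 4 / 16.

(* With s = sn, Phi^2 = e (1 - k^2 s^2) / (1 + b^2 s^2); this is the ODE residual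
   times (1 + b^2 s^2)^(5/2) / (sqrt e dn), a quadratic polynomial in s^2. *)
Lemma ode_residual_poly om c e k b g s : g <> 0 ->
  (k ^ 2 + b ^ 2) / (4 * g ^ 2)
    * ((1 - 2 * s ^ 2) * (1 + b ^ 2 * s ^ 2) - 3 * b ^ 2 * s ^ 2 * (1 - s ^ 2))
  + (om - c ^ 2 / 4) * (1 + b ^ 2 * s ^ 2) ^ 2
  + c / 2 * e * (1 - k ^ 2 * s ^ 2) * (1 + b ^ 2 * s ^ 2)
  - 3 / 16 * e ^ 2 * (1 - k ^ 2 * s ^ 2) ^ 2
  = ode_coef0 om c e k b g + ode_coef1 om c e k b g * s ^ 2
    + ode_coef2 om c e k b g * s ^ 4.
Proof. intros. unfold ode_coef0, ode_coef1, ode_coef2. field. auto. Qed.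

Section EllipticProfile.

Variables e k b g : R.
Hypotheses (He : 0 < e) (Hk : k ^ 2 < 1) (Hg : 0 < g).

(* With t = phase k g x, the profile and its x-derivative are amp_profile t and
   amp_slope t; amp_dslope is the t-derivative of amp_slope. *)
Definition amp_profile t :=
  sqrt e * sqrt (1 - k ^ 2 * sin t ^ 2) / sqrt (1 + b ^ 2 * sin t ^ 2).
Definition amp_slope t :=
  - sqrt e * (k ^ 2 + b ^ 2) / (2 * g) * sin t * cos t
  / (sqrt (1 + b ^ 2 * sin t ^ 2) * (1 + b ^ 2 * sin t ^ 2)).
Definition amp_dslope t :=
  - sqrt e * (k ^ 2 + b ^ 2) / (2 * g)
  * ((1 - 2 * sin t ^ 2) * (1 + b ^ 2 * sin t ^ 2) - 3 * b ^ 2 * sin t ^ 2 * (1 - sin t ^ 2))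
  / (sqrt (1 + b ^ 2 * sin t ^ 2) * (1 + b ^ 2 * sin t ^ 2) ^ 2).

Lemma elliptic_profile_amp x : elliptic_profile e k b g x = amp_profile (phase k g x).
Proof. reflexivity. Qed.

Lemma phase_derive x :
  is_derive (phase k g) x (sqrt (1 - k ^ 2 * sin (phase k g x) ^ 2) / (2 * g)).
Proof.
  assert (Hlin : is_derive (fun x => x / (2 * g)) x (/ (2 * g)))
    by (auto_derive; [auto | field; lra]).
  apply (is_derive_comp_mult (fun v => jam v k) _ x _ _ _ (jam_derive k Hk _) Hlin).
  unfold phase. field. lra.
Qed.

Ltac normalize_pow :=
  repeat match goal with |- context [?x * (?x * 1)] => change (x * (x * 1)) with (x ^ 2) end.

Lemma amp_profile_derive t :
  is_derive amp_profile t (amp_slope t * (2 * g) / sqrt (1 - k ^ 2 * sin t ^ 2)).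
Proof.
  pose proof (ell_radicand_pos k Hk t). pose proof (one_add_sqr_pos b (sin t)).
  assert (HD := pow2_sqrt (1 - k ^ 2 * sin t ^ 2) ltac:(lra)).
  assert (HS := pow2_sqrt (1 + b ^ 2 * sin t ^ 2) ltac:(lra)).
  assert (0 < sqrt (1 - k ^ 2 * sin t ^ 2)) by (apply sqrt_lt_R0; lra).
  assert (0 < sqrt (1 + b ^ 2 * sin t ^ 2)) by (apply sqrt_lt_R0; lra).
  unfold amp_profile, amp_slope. auto_derive; normalize_pow.
  - repeat split; lra.
  - replace (1 + - (k ^ 2 * sin t ^ 2)) with (1 - k ^ 2 * sin t ^ 2) by ring.
    set (D := sqrt (1 - k ^ 2 * sin t ^ 2)) in *. set (S := sqrt (1 + b ^ 2 * sin t ^ 2)) in *.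
    field_simplify; try lra. replace (S ^ 3) with (S ^ 2 * S) by ring.
    rewrite HD, HS. assert (0 < D * S) by (apply Rmult_lt_0_compat; lra).
    field. repeat split; apply Rgt_not_eq; nra.
Qed.

Lemma amp_slope_derive t : is_derive amp_slope t (amp_dslope t).
Proof.
  pose proof (one_add_sqr_pos b (sin t)).
  assert (HS := pow2_sqrt (1 + b ^ 2 * sin t ^ 2) ltac:(lra)).
  assert (0 < sqrt (1 + b ^ 2 * sin t ^ 2)) by (apply sqrt_lt_R0; lra).
  unfold amp_slope, amp_dslope. auto_derive; normalize_pow.
  - repeat split; try lra. apply Rgt_not_eq, Rmult_lt_0_compat; lra.
  - set (S := sqrt (1 + b ^ 2 * sin t ^ 2)) in *.
    field_simplify; try lra. replace (S ^ 3) with (S ^ 2 * S) by ring.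
    rewrite HS, cos_sqr.
    assert (0 < g * S * (1 + b ^ 2 * sin t ^ 2) ^ 2) by (apply Rmult_lt_0_compat; nra).
    assert (0 < g * S * (1 + b ^ 2 * sin t ^ 2) ^ 3) by (apply Rmult_lt_0_compat; nra).
    field. split; apply Rgt_not_eq; lra.
Qed.

Lemma elliptic_profile_solves_ode om c :
  ode_coef0 om c e k b g = 0 -> ode_coef1 om c e k b g = 0 -> ode_coef2 om c e k b g = 0 ->
  solves_ode om c (elliptic_profile e k b g).
Proof.
  intros E0 E1 E2.
  exists (fun x => amp_slope (phase k g x)),
    (fun x => amp_dslope (phase k g x) * (sqrt (1 - k ^ 2 * sin (phase k g x) ^ 2) / (2 * g))).
  intros x. pose proof (ell_radicand_pos k Hk (phase k g x)).
  split; [|split].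
  - apply (is_derive_comp_mult _ _ x _ _ _ (amp_profile_derive _) (phase_derive x)).
    assert (0 < sqrt (1 - k ^ 2 * sin (phase k g x) ^ 2)) by (apply sqrt_lt_R0; lra).
    field. lra.
  - apply (is_derive_comp_mult _ _ x _ _ _ (amp_slope_derive _) (phase_derive x)). reflexivity.
  - rewrite elliptic_profile_amp. set (t := phase k g x) in *.
    pose proof (one_add_sqr_pos b (sin t)).
    replace (Rabs (amp_profile t) ^ 4) with ((Rabs (amp_profile t) ^ 2) ^ 2) by ring.
    rewrite pow2_abs. unfold amp_profile, amp_dslope.
    assert (HD := pow2_sqrt (1 - k ^ 2 * sin t ^ 2) ltac:(lra)).
    assert (HS := pow2_sqrt (1 + b ^ 2 * sin t ^ 2) ltac:(lra)).
    assert (Hr := pow2_sqrt e ltac:(lra)).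
    assert (0 < sqrt (1 + b ^ 2 * sin t ^ 2)) by (apply sqrt_lt_R0; lra).
    set (D := sqrt (1 - k ^ 2 * sin t ^ 2)) in *. set (S := sqrt (1 + b ^ 2 * sin t ^ 2)) in *.
    set (r := sqrt e) in *. set (s := sin t) in *.
    transitivity (r * D / (S * (1 + b ^ 2 * s ^ 2) ^ 2) *
      ((k ^ 2 + b ^ 2) / (4 * g ^ 2)
         * ((1 - 2 * s ^ 2) * (1 + b ^ 2 * s ^ 2) - 3 * b ^ 2 * s ^ 2 * (1 - s ^ 2))
       + (om - c ^ 2 / 4) * (1 + b ^ 2 * s ^ 2) ^ 2
       + c / 2 * r ^ 2 * D ^ 2 * (1 + b ^ 2 * s ^ 2) - 3 / 16 * (r ^ 2) ^ 2 * (D ^ 2) ^ 2)).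
    + rewrite <- HS. field. repeat split; lra.
    + rewrite HD, Hr, ode_residual_poly, E0, E1, E2 by lra. ring.
Qed.

Lemma phase_0 : phase k g 0 = 0.
Proof. unfold phase. replace (0 / (2 * g)) with 0 by (field; lra). apply jam_0, Hk. Qed.

Lemma phase_opp x : phase k g (- x) = - phase k g x.
Proof.
  unfold phase. replace (- x / (2 * g)) with (- (x / (2 * g))) by (field; lra).
  apply jam_opp, Hk.
Qed.

Lemma phase_add_period x : phase k g (x + 2 * (g * ellF k PI)) = phase k g x + PI.
Proof.
  unfold phase. replace ((x + 2 * (g * ellF k PI)) / (2 * g)) with (x / (2 * g) + ellF k PI)
    by (field; lra).
  apply jam_add_period, Hk.
Qed.

Lemma phase_half_period : phase k g (g * ellF k PI) = PI / 2.
Proof.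
  unfold phase. replace (g * ellF k PI / (2 * g)) with (ellF k PI / 2) by (field; lra).
  apply jam_half_period, Hk.
Qed.

Lemma phase_lt x y : x < y -> phase k g x < phase k g y.
Proof.
  intros. apply jam_lt; [exact Hk|]. apply Rmult_lt_compat_r; [|lra].
  apply Rinv_0_lt_compat; lra.
Qed.

Lemma elliptic_profile_sqrt x :
  elliptic_profile e k b g x = sqrt (e * sn2_ratio k b (sin (phase k g x) ^ 2)).
Proof.
  rewrite elliptic_profile_amp. unfold amp_profile, sn2_ratio.
  pose proof (ell_radicand_pos k Hk (phase k g x)).
  pose proof (one_add_sqr_pos b (sin (phase k g x))).
  rewrite sqrt_mult_alt, sqrt_div_alt by lra. unfold Rdiv. ring.
Qed.

Lemma elliptic_profile_bump om c :
  0 < k ^ 2 + b ^ 2 -> solves_ode om c (elliptic_profile e k b g) ->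
  pos_single_bump_solution om c (g * ellF k PI) (elliptic_profile e k b g).
Proof.
  intros Hkb Hode.
  assert (Hratio := fun x => sn2_ratio_pos k b (sin (phase k g x) ^ 2) Hk (sin_sqr_bounds _)).
  assert (Hle : forall x y, sin (phase k g x) ^ 2 <= sin (phase k g y) ^ 2 ->
            elliptic_profile e k b g y <= elliptic_profile e k b g x).
  { intros x y Hxy. rewrite !elliptic_profile_sqrt. apply sqrt_le_1_alt.
    apply Rmult_le_compat_l; [lra|]. apply sn2_ratio_le; [lra|]. split; [apply pow2_ge_0 | lra]. }
  split; [exact Hode|]. repeat split.
  - intros x. rewrite !elliptic_profile_sqrt, phase_add_period, neg_sin. do 3 f_equal. ring.
  - intros x. rewrite elliptic_profile_sqrt. apply sqrt_lt_R0, Rmult_lt_0_compat; auto.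
  - intros x. rewrite !elliptic_profile_sqrt, phase_opp, sin_neg. do 3 f_equal. ring.
  - intros x. apply Hle. rewrite phase_0, sin_0. pose proof (sin_sqr_bounds (phase k g x)). nra.
  - intros x. apply Hle. rewrite phase_half_period, sin_PI2.
    pose proof (sin_sqr_bounds (phase k g x)). nra.
  - intros x y Hx Hxy Hy. rewrite !elliptic_profile_sqrt. apply sqrt_lt_1_alt. split.
    + apply Rmult_le_pos; [lra | apply Rlt_le, Hratio].
    + apply Rmult_lt_compat_l; [lra|]. apply sn2_ratio_lt; [lra|].
      pose proof (phase_lt 0 x Hx). pose proof (phase_lt x y Hxy).
      pose proof (phase_lt y (g * ellF k PI) Hy). rewrite phase_0, phase_half_period in *.
      pose proof PI_RGT_0.
      assert (0 < sin (phase k g x)) by (apply sin_gt_0; lra).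
      assert (sin (phase k g x) < sin (phase k g y)) by (apply sin_increasing_1; lra).
      split; nra.
Qed.

End EllipticProfile.

Lemma elliptic_profile_sqr e k b g x : 0 <= e ->
  elliptic_profile e k b g x ^ 2
  = e * jdn (x / (2 * g)) k ^ 2 / (1 + b ^ 2 * jsn (x / (2 * g)) k ^ 2).
Proof.
  intros He. unfold elliptic_profile. pose proof (one_add_sqr_pos b (jsn (x / (2 * g)) k)).
  unfold Rdiv. rewrite !Rpow_mult_distr, pow_inv, !pow2_sqrt by lra. reflexivity.
Qed.

(** * Parametrisation by the middle root of a cubic *)

Lemma ode_coefs_vanish om c e1 e2 e3 k b g : e1 < 0 -> 0 < e2 -> e2 < e3 ->
  e1 + e2 + e3 = 4 * c -> e1 * e2 + e1 * e3 + e2 * e3 = -16 * (om - c ^ 2 / 4) ->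
  k ^ 2 = - e1 * (e3 - e2) / (e3 * (e2 - e1)) -> b ^ 2 = (e3 - e2) / (e2 - e1) ->
  g ^ 2 = 4 / (e3 * (e2 - e1)) ->
  ode_coef0 om c e3 k b g = 0 /\ ode_coef1 om c e3 k b g = 0 /\ ode_coef2 om c e3 k b g = 0.
Proof.
  intros He1 He2 He23 Hsum Hsym Hk Hb Hg.
  assert (Hom : om - c ^ 2 / 4 = - (e1 * e2 + e1 * e3 + e2 * e3) / 16) by lra.
  assert (Hc : c = (e1 + e2 + e3) / 4) by lra.
  assert (HG : 4 * g ^ 2 = 16 / (e3 * (e2 - e1))) by (rewrite Hg; field; lra).
  unfold ode_coef0, ode_coef1, ode_coef2.
  replace (k ^ 4) with ((k ^ 2) ^ 2) by ring. replace (b ^ 4) with ((b ^ 2) ^ 2) by ring.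
  rewrite Hom, HG, Hk, Hb, Hc. split; [|split]; field; lra.
Qed.

Definition admissible om c := c ^ 2 / 4 < om \/ (om = c ^ 2 / 4 /\ 0 < c).

(* For admissible [om, c] and [0 < p < alpha0 om c], [eta1 om c p < 0 < p < eta3 om c p] are
   the roots of the cubic with [eta1 + p + eta3 = 4 c] and
   [eta1 p + eta1 eta3 + p eta3 = 16 (c^2/4 - om)]; [Afun om c p] is the discriminant of the
   quadratic satisfied by [eta1] and [eta3].  Since [ellF k PI = 2 K(k)], [Lfun] is the
   half-period [2 g K(k)]. *)
Definition eta3 om c p := (4 * c - p + sqrt (Afun om c p)) / 2.
Definition eta1 om c p := (4 * c - p - sqrt (Afun om c p)) / 2.
Definition mod2 om c p := - eta1 om c p * (eta3 om c p - p) / (eta3 om c p * (p - eta1 om c p)).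
Definition beta2 om c p := (eta3 om c p - p) / (p - eta1 om c p).
Definition gscale om c p := 2 / sqrt (eta3 om c p * (p - eta1 om c p)).
Definition Lfun om c p := gscale om c p * ellF (sqrt (mod2 om c p)) PI.
Definition profile_sn om c p x := jsn (x / (2 * gscale om c p)) (sqrt (mod2 om c p)).
Definition profile om c p :=
  elliptic_profile (eta3 om c p) (sqrt (mod2 om c p)) (sqrt (beta2 om c p)) (gscale om c p).

(* [repeat split] would also attack the existential [ex_derive] side conditions. *)
Ltac split_conj := repeat match goal with |- _ /\ _ => split end.

Lemma ex_derive_eta om c p : 0 < Afun om c p ->
  ex_derive (eta3 om c) p /\ ex_derive (eta1 om c) p.
Proof. unfold eta3, eta1, Afun. intros. split; auto_derive; lra. Qed.

Lemma continuous_eta3 om c p : 0 < Afun om c p -> continuous (eta3 om c) p.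
Proof. intros HA. apply continuous_of_ex_derive, (ex_derive_eta om c p HA). Qed.

Lemma continuous_eta_gap om c p : 0 < Afun om c p ->
  continuous (fun q => eta3 om c q * (q - eta1 om c q)) p.
Proof.
  intros HA. destruct (ex_derive_eta om c p HA). apply continuous_of_ex_derive.
  auto_derive. split_conj; auto.
Qed.

Lemma continuous_mod2 om c p : 0 < Afun om c p -> eta3 om c p <> 0 -> p - eta1 om c p <> 0 ->
  continuous (mod2 om c) p.
Proof.
  intros HA He3 He1. destruct (ex_derive_eta om c p HA). apply continuous_of_ex_derive.
  unfold mod2. auto_derive. split_conj; auto.
Qed.

Lemma continuous_beta2 om c p : 0 < Afun om c p -> p - eta1 om c p <> 0 ->
  continuous (beta2 om c) p.
Proof.
  intros HA He1. destruct (ex_derive_eta om c p HA). apply continuous_of_ex_derive.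
  unfold beta2. auto_derive. split_conj; auto.
Qed.

Lemma continuous_gscale om c p : 0 < Afun om c p -> 0 < eta3 om c p * (p - eta1 om c p) ->
  continuous (gscale om c) p.
Proof.
  intros HA Hgap. destruct (ex_derive_eta om c p HA). apply continuous_of_ex_derive.
  unfold gscale. auto_derive. split_conj; auto.
  apply Rgt_not_eq, sqrt_lt_R0. lra.
Qed.

Section CubicRoots.

Variables om c : R.
Hypothesis Hadm : admissible om c.

Lemma sqrt_om_facts : 0 < sqrt om /\ sqrt om ^ 2 = om /\ c <= 2 * sqrt om /\ 0 < c + 2 * sqrt om.
Proof.
  assert (Hom : 0 < om) by (destruct Hadm as [Hlt|[-> Hc]]; pose proof (pow2_ge_0 c); nra).
  assert (0 < sqrt om) by (apply sqrt_lt_R0; lra).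
  assert (Hw := pow2_sqrt om ltac:(lra)).
  repeat split; try lra; destruct Hadm as [Hlt|[Heq Hc]]; nra.
Qed.

Lemma alpha0_facts :
  0 < alpha0 om c < 2 * c + 4 * sqrt om /\
  3 * alpha0 om c ^ 2 - 8 * c * alpha0 om c + 4 * c ^ 2 - 16 * om = 0 /\
  4 * c - sqrt (48 * om + 4 * c ^ 2) <= 0.
Proof.
  destruct sqrt_om_facts as [Hw0 [Hw [Hc1 Hc2]]]. set (w := sqrt om) in *.
  assert (HQ := pow2_sqrt (48 * om + 4 * c ^ 2) ltac:(nra)).
  assert (0 <= sqrt (48 * om + 4 * c ^ 2)) by apply sqrt_pos.
  set (Q := sqrt (48 * om + 4 * c ^ 2)) in *.
  unfold alpha0. fold Q.
  assert (4 * c <= Q) by nra.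
  assert (Q < 2 * c + 12 * w) by nra.
  assert (- 4 * c < Q) by (destruct Hadm as [Hlt|[Heq Hc]]; nra).
  repeat split; lra.
Qed.

Lemma Afun_alpha0 : Afun om c (alpha0 om c) = 48 * om + 4 * c ^ 2.
Proof. destruct alpha0_facts as [_ [Hroot _]]. unfold Afun. lra. Qed.

Definition Afun_min om c := Rmin (64 * om) (48 * om + 4 * c ^ 2).

Lemma Afun_min_pos : 0 < Afun_min om c.
Proof.
  destruct sqrt_om_facts as [Hw0 [Hw _]].
  assert (0 < om) by (rewrite <- Hw; apply pow_lt, Hw0). pose proof (pow2_ge_0 c).
  unfold Afun_min, Rmin. destruct (Rle_dec _ _); lra.
Qed.

(* [Afun] is concave, so on [0, alpha0] it lies above its values at the endpoints. *)
Lemma Afun_ge_min p : 0 <= p <= alpha0 om c -> Afun_min om c <= Afun om c p.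
Proof.
  intros Hp. destruct alpha0_facts as [[Ha _] _]. pose proof Afun_alpha0 as HA.
  set (a := alpha0 om c) in *.
  assert (Id : a * Afun om c p = (a - p) * Afun om c 0 + p * Afun om c a + 3 * a * p * (a - p))
    by (unfold Afun; ring).
  rewrite HA in Id. unfold Afun at 2 in Id.
  assert (Afun_min om c <= 64 * om) by apply Rmin_l.
  assert (Afun_min om c <= 48 * om + 4 * c ^ 2) by apply Rmin_r.
  assert (0 <= 3 * a * p * (a - p)) by (apply Rmult_le_pos; [|lra]; apply Rmult_le_pos; lra).
  apply (Rmult_le_reg_l a); [exact Ha|]. rewrite Id. nra.
Qed.

Lemma Afun_pos p : 0 <= p <= alpha0 om c -> 0 < Afun om c p.
Proof. intros Hp. pose proof (Afun_ge_min p Hp). pose proof Afun_min_pos. lra. Qed.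

Section MiddleRoot.

Variable p : R.
Hypothesis Hp : 0 < p < alpha0 om c.

Lemma sqrt_Afun_pos : 0 < sqrt (Afun om c p).
Proof. apply sqrt_lt_R0, Afun_pos. lra. Qed.

Lemma eta_order : eta1 om c p < 0 /\ p < eta3 om c p.
Proof.
  destruct sqrt_om_facts as [Hw0 [Hw [Hc1 Hc2]]]. destruct alpha0_facts as [[Ha1 Ha2] [Ha3 Hr]].
  pose proof sqrt_Afun_pos.
  assert (HS := pow2_sqrt (Afun om c p) ltac:(pose proof (Afun_pos p); lra)).
  unfold eta1, eta3. set (s := sqrt (Afun om c p)) in *. unfold Afun in HS.
  set (a := alpha0 om c) in *. set (w := sqrt om) in *.
  assert (HQ := pow2_sqrt (48 * om + 4 * c ^ 2) ltac:(nra)).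
  set (Q := sqrt (48 * om + 4 * c ^ 2)) in *.
  assert (Hquad : 3 * p ^ 2 - 8 * c * p + 4 * c ^ 2 - 16 * om < 0).
  { assert (Hfac : 3 * p ^ 2 - 8 * c * p + 4 * c ^ 2 - 16 * om
                   = 3 * (p - a) * (p - (4 * c - Q) / 3)).
    { unfold a, alpha0. fold Q. field_simplify. rewrite HQ. field. }
    rewrite Hfac. assert (0 < (a - p) * (p - (4 * c - Q) / 3)) by (apply Rmult_lt_0_compat; lra).
    nra. }
  split.
  - destruct (Rle_dec (4 * c - p) 0); [lra|].
    assert (4 * c - p < s); [|lra].
    assert (0 < (p - (2 * c - 4 * w)) * (2 * c + 4 * w - p)) by (apply Rmult_lt_0_compat; lra).
    apply Rsqr_incrst_0; unfold Rsqr; lra.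
  - destruct (Rle_dec (3 * p - 4 * c) 0); [lra|].
    assert (3 * p - 4 * c < s); [|lra].
    apply Rsqr_incrst_0; unfold Rsqr; lra.
Qed.

Lemma eta3_pos : 0 < eta3 om c p.
Proof. pose proof eta_order. lra. Qed.

Lemma eta_gap_pos : 0 < eta3 om c p * (p - eta1 om c p).
Proof. pose proof eta_order. apply Rmult_lt_0_compat; lra. Qed.

Lemma eta_sum : eta1 om c p + p + eta3 om c p = 4 * c.
Proof. unfold eta1, eta3. field. Qed.

Lemma eta_sym2 :
  eta1 om c p * p + eta1 om c p * eta3 om c p + p * eta3 om c p = -16 * (om - c ^ 2 / 4).
Proof.
  assert (HS := pow2_sqrt (Afun om c p) ltac:(pose proof (Afun_pos p); lra)).
  unfold eta1, eta3. set (s := sqrt (Afun om c p)) in *. unfold Afun in HS. nra.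
Qed.

Lemma one_sub_mod2 : 1 - mod2 om c p = p * sqrt (Afun om c p) / (eta3 om c p * (p - eta1 om c p)).
Proof.
  pose proof eta_order. pose proof eta3_pos.
  replace (sqrt (Afun om c p)) with (eta3 om c p - eta1 om c p) by (unfold eta3, eta1; field).
  unfold mod2. field. lra.
Qed.

Lemma mod2_bounds : 0 < mod2 om c p < 1.
Proof.
  pose proof eta_order. pose proof eta_gap_pos. pose proof one_sub_mod2. pose proof sqrt_Afun_pos.
  split.
  - unfold mod2. apply Rdiv_lt_0_compat; nra.
  - assert (0 < p * sqrt (Afun om c p) / (eta3 om c p * (p - eta1 om c p))); [|lra].
    apply Rdiv_lt_0_compat; nra.
Qed.

Lemma beta2_pos : 0 < beta2 om c p.
Proof. pose proof eta_order. unfold beta2. apply Rdiv_lt_0_compat; lra. Qed.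

Lemma gscale_pos : 0 < gscale om c p.
Proof.
  unfold gscale. apply Rdiv_lt_0_compat; [lra|]. apply sqrt_lt_R0, eta_gap_pos.
Qed.

Lemma gscale_sqr : gscale om c p ^ 2 = 4 / (eta3 om c p * (p - eta1 om c p)).
Proof.
  pose proof eta_gap_pos. unfold gscale, Rdiv.
  rewrite Rpow_mult_distr, pow_inv, pow2_sqrt by lra. ring.
Qed.

Lemma profile_solves_ode : solves_ode om c (profile om c p).
Proof.
  pose proof eta_order. pose proof mod2_bounds. pose proof beta2_pos.
  destruct (ode_coefs_vanish om c (eta1 om c p) p (eta3 om c p) (sqrt (mod2 om c p))
    (sqrt (beta2 om c p)) (gscale om c p)) as [E0 [E1 E2]];
    rewrite ?pow2_sqrt by lra; auto using eta_sum, eta_sym2, gscale_sqr; try lra.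
  apply elliptic_profile_solves_ode; auto using eta3_pos, gscale_pos.
  rewrite pow2_sqrt; lra.
Qed.

Lemma profile_bump : pos_single_bump_solution om c (Lfun om c p) (profile om c p).
Proof.
  pose proof mod2_bounds. pose proof beta2_pos.
  apply elliptic_profile_bump; auto using eta3_pos, gscale_pos, profile_solves_ode;
    rewrite !pow2_sqrt; lra.
Qed.

Lemma profile_sqrt x :
  profile om c p x =
  sqrt (eta3 om c p *
        ((1 - mod2 om c p * profile_sn om c p x ^ 2) /
         (1 + beta2 om c p * profile_sn om c p x ^ 2))).
Proof.
  pose proof mod2_bounds. pose proof beta2_pos.
  unfold profile. rewrite elliptic_profile_sqrt; [|apply eta3_pos | rewrite pow2_sqrt; lra].
  unfold sn2_ratio, phase, profile_sn, jsn. rewrite !pow2_sqrt by lra. reflexivity.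
Qed.

Lemma PI_le_ellF_mod2 : PI <= ellF (sqrt (mod2 om c p)) PI.
Proof.
  pose proof mod2_bounds. pose proof PI_RGT_0.
  assert (Hk : sqrt (mod2 om c p) ^ 2 < 1) by (rewrite pow2_sqrt; lra).
  pose proof (ellF_sub_bounds _ Hk 0 PI ltac:(lra)) as [Hlb _]. rewrite ellF_0 in Hlb. lra.
Qed.

Lemma Lfun_pos : 0 < Lfun om c p.
Proof.
  pose proof PI_le_ellF_mod2. pose proof PI_RGT_0. pose proof gscale_pos.
  unfold Lfun. apply Rmult_lt_0_compat; lra.
Qed.

Lemma Lfun_le : Lfun om c p <= 2 * PI / sqrt (p * sqrt (Afun om c p)).
Proof.
  pose proof mod2_bounds. pose proof eta_gap_pos. pose proof sqrt_Afun_pos. pose proof PI_RGT_0.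
  assert (Hk : sqrt (mod2 om c p) ^ 2 < 1) by (rewrite pow2_sqrt; lra).
  pose proof (ellF_sub_bounds _ Hk 0 PI ltac:(lra)) as [_ Hub].
  rewrite ellF_0, pow2_sqrt, one_sub_mod2, sqrt_div_alt in Hub by lra.
  assert (0 < sqrt (eta3 om c p * (p - eta1 om c p))) by (apply sqrt_lt_R0; lra).
  assert (0 < sqrt (p * sqrt (Afun om c p))) by (apply sqrt_lt_R0, Rmult_lt_0_compat; lra).
  unfold Lfun, gscale. apply (Rle_trans _ (2 / sqrt (eta3 om c p * (p - eta1 om c p))
    * ((PI - 0) / (sqrt (p * sqrt (Afun om c p)) / sqrt (eta3 om c p * (p - eta1 om c p)))))).
  - apply Rmult_le_compat_l; [apply Rlt_le, Rdiv_lt_0_compat; lra | lra].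
  - right. field. lra.
Qed.

End MiddleRoot.

Lemma eventually_in_range : at_right 0 (fun p => 0 < p < alpha0 om c).
Proof. apply at_right_interval. apply alpha0_facts. Qed.

Lemma eta_at_0 : sqrt (Afun om c 0) = 8 * sqrt om /\
  eta3 om c 0 = 2 * c + 4 * sqrt om /\ eta1 om c 0 = 2 * c - 4 * sqrt om.
Proof.
  destruct sqrt_om_facts as [Hw0 [Hw _]].
  assert (E : sqrt (Afun om c 0) = 8 * sqrt om).
  { unfold Afun. replace (-3 * 0 ^ 2 + 8 * c * 0 + 64 * om) with ((8 * sqrt om) ^ 2)
      by (rewrite Rpow_mult_distr, Hw; ring).
    apply sqrt_pow2. lra. }
  unfold eta3, eta1. rewrite E. split; [reflexivity | split; field].
Qed.

Lemma Afun_0_pos : 0 < Afun om c 0.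
Proof. apply Afun_pos. pose proof alpha0_facts. lra. Qed.

Lemma Lfun_continuous p : 0 < p < alpha0 om c -> continuous (Lfun om c) p.
Proof.
  intros Hp. pose proof (eta_order p Hp). pose proof (eta_gap_pos p Hp).
  pose proof (mod2_bounds p Hp). pose proof (Afun_pos p ltac:(lra)).
  apply (continuous_mult (K := R_AbsRing) (gscale om c) (fun q => ellF (sqrt (mod2 om c q)) PI)).
  - apply continuous_gscale; assumption.
  - apply (continuous_comp (fun q => sqrt (mod2 om c q)) (fun k => ellF k PI)).
    + apply (continuous_comp (mod2 om c) sqrt); [|apply continuous_sqrt].
      apply continuous_mod2; lra.
    + apply ellF_PI_continuous. rewrite pow2_sqrt; lra.
Qed.

Lemma profile_tends (x e0 a0 b0 : R) : 1 + b0 <> 0 ->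
  filterlim (eta3 om c) (at_right 0) (locally e0) ->
  filterlim (fun p => mod2 om c p * profile_sn om c p x ^ 2) (at_right 0) (locally a0) ->
  filterlim (fun p => beta2 om c p * profile_sn om c p x ^ 2) (at_right 0) (locally b0) ->
  filterlim (fun p => profile om c p x) (at_right 0) (locally (sqrt (e0 * ((1 - a0) / (1 + b0))))).
Proof.
  intros Hb0 He Ha Hb.
  apply (filterlim_ext_loc (fun p => sqrt (eta3 om c p *
    ((1 - mod2 om c p * profile_sn om c p x ^ 2) / (1 + beta2 om c p * profile_sn om c p x ^ 2))))).
  - generalize eventually_in_range. apply filter_imp => p Hp. symmetry. apply profile_sqrt, Hp.
  - apply (flim_continuous sqrt); [apply continuous_sqrt|].
    apply flim_mult; [exact He|]. apply flim_div; [exact Hb0| |].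
    + apply flim_minus; [apply filterlim_const | exact Ha].
    + apply flim_plus; [apply filterlim_const | exact Hb].
Qed.

End CubicRoots.

(** * The limit p -> 0+ *)

Lemma soliton_even om c x : soliton om c (- x) = soliton om c x.
Proof.
  unfold soliton, cosh. destruct (Rlt_dec _ _).
  - rewrite <- Ropp_mult_distr_r, Ropp_involutive, (Rplus_comm (exp _)). reflexivity.
  - replace ((c * - x) ^ 2) with ((c * x) ^ 2) by ring. reflexivity.
Qed.

Lemma cosh_sqr_sub_sinh_sqr v : cosh v ^ 2 - sinh v ^ 2 = 1.
Proof. unfold cosh, sinh. rewrite exp_Ropp. pose proof (exp_pos v). field. lra. Qed.

Lemma cosh_double v : cosh (2 * v) = cosh v ^ 2 + sinh v ^ 2.
Proof.
  unfold cosh, sinh. replace (- (2 * v)) with (- v + - v) by ring.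
  replace (2 * v) with (v + v) by ring. rewrite !exp_plus. field.
Qed.

Section Nondegenerate.

Variables om c : R.
Hypothesis Hlt : c ^ 2 / 4 < om.
Let Hadm : admissible om c := or_introl Hlt.

Lemma nondeg_eta_at_0 : eta1 om c 0 < 0 < eta3 om c 0.
Proof.
  destruct (sqrt_om_facts om c Hadm) as [Hw0 [Hw [Hc1 Hc2]]].
  destruct (eta_at_0 om c Hadm) as [_ [-> ->]]. nra.
Qed.

Lemma nondeg_mod2_at_0 : mod2 om c 0 = 1.
Proof. pose proof nondeg_eta_at_0. unfold mod2. field. lra. Qed.

Lemma nondeg_sqrt_mod2_sqr_tends_1 :
  filterlim (fun p => sqrt (mod2 om c p) ^ 2) (at_right 0) (locally 1).
Proof.
  pose proof nondeg_eta_at_0. pose proof (Afun_0_pos om c Hadm).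
  apply (filterlim_ext_loc (mod2 om c)).
  - generalize (eventually_in_range om c Hadm). apply filter_imp => p Hp.
    pose proof (mod2_bounds om c Hadm p Hp). rewrite pow2_sqrt; lra.
  - rewrite <- nondeg_mod2_at_0. apply flim_at_right, continuous_mod2; lra.
Qed.

Lemma nondeg_sqrt_mod2_sqr_lt_1 : at_right 0 (fun p => sqrt (mod2 om c p) ^ 2 < 1).
Proof.
  generalize (eventually_in_range om c Hadm). apply filter_imp => p Hp.
  pose proof (mod2_bounds om c Hadm p Hp). rewrite pow2_sqrt; lra.
Qed.

Lemma nondeg_gscale_at_0_pos : 0 < gscale om c 0.
Proof.
  pose proof nondeg_eta_at_0. unfold gscale. apply Rdiv_lt_0_compat; [lra|].
  apply sqrt_lt_R0. nra.
Qed.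

Lemma nondeg_gscale_tends : filterlim (gscale om c) (at_right 0) (locally (gscale om c 0)).
Proof.
  pose proof nondeg_eta_at_0. pose proof (Afun_0_pos om c Hadm).
  apply flim_at_right, continuous_gscale; nra.
Qed.

Lemma nondeg_Lfun_eventually_gt M : at_right 0 (fun p => M < Lfun om c p).
Proof.
  pose proof nondeg_gscale_at_0_pos. pose proof (Rle_abs M). pose proof (Rabs_pos M).
  assert (Hg0 : 0 < gscale om c 0 / 2) by lra.
  generalize (filter_and _ _ (flim_abs_lt _ _ nondeg_gscale_tends _ Hg0)
    (ellF_PI_eventually_gt _ nondeg_sqrt_mod2_sqr_tends_1 nondeg_sqrt_mod2_sqr_lt_1
       (2 * (Rabs M + 1) / gscale om c 0))).
  apply filter_imp => p [Hg HE]. apply Rabs_def2 in Hg. unfold Lfun.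
  set (g0 := gscale om c 0) in *.
  apply (Rlt_le_trans _ (g0 / 2 * (2 * (Rabs M + 1) / g0))).
  - replace (g0 / 2 * (2 * (Rabs M + 1) / g0)) with (Rabs M + 1) by (field; lra). lra.
  - apply Rmult_le_compat; [lra | apply Rlt_le, Rdiv_lt_0_compat; lra | lra | lra].
Qed.

(* At [p = 0] the profile with [k = 1] is the soliton: [sn (., 1) = tanh = sin o gd]. *)
Lemma nondeg_soliton_eq x :
  soliton om c x =
  sqrt (eta3 om c 0 * ((1 - 1 * sin (gd (x / (2 * gscale om c 0))) ^ 2) /
                       (1 + beta2 om c 0 * sin (gd (x / (2 * gscale om c 0))) ^ 2))).
Proof.
  destruct (sqrt_om_facts om c Hadm) as [Hw0 [Hw [Hc1 Hc2]]].
  destruct (eta_at_0 om c Hadm) as [_ [E3 E1]].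
  unfold soliton. destruct (Rlt_dec (c ^ 2 / 4) om) as [_|]; [|lra].
  assert (HR0 : 0 < 4 * om - c ^ 2) by lra.
  assert (HR := pow2_sqrt _ (Rlt_le _ _ HR0)).
  assert (0 < sqrt (4 * om - c ^ 2)) by (apply sqrt_lt_R0; lra).
  set (w := sqrt om) in *. set (R := sqrt (4 * om - c ^ 2)) in *.
  assert (Hg : gscale om c 0 = 1 / R).
  { unfold gscale. rewrite E3, E1.
    replace ((2 * c + 4 * w) * (0 - (2 * c - 4 * w))) with ((2 * R) ^ 2)
      by (rewrite Rpow_mult_distr, HR, <- Hw; ring).
    rewrite sqrt_pow2 by lra. field. lra. }
  unfold beta2. rewrite Hg, E3, E1, sin_gd.
  set (v := x / (2 * (1 / R))). replace (R * x) with (2 * v) by (unfold v; field; lra).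
  rewrite cosh_double. f_equal.
  pose proof (cosh_sqr_sub_sinh_sqr v). pose proof (cosh_pos v).
  set (C := cosh v) in *. set (S := sinh v) in *.
  assert (HC : C ^ 2 = 1 + S ^ 2) by lra.
  replace ((S / C) ^ 2) with (S ^ 2 / (1 + S ^ 2)) by (rewrite <- HC; field; lra).
  rewrite HC, <- Hw.
  pose proof (pow2_ge_0 S).
  assert (0 < 2 * w * (1 + S ^ 2 + S ^ 2) - c) by nra.
  field. repeat split; nra.
Qed.

Lemma nondeg_profile_tends x : 0 <= x ->
  filterlim (fun p => profile om c p x) (at_right 0) (locally (soliton om c x)).
Proof.
  intros Hx. pose proof nondeg_eta_at_0. pose proof (Afun_0_pos om c Hadm).
  pose proof nondeg_gscale_at_0_pos. set (v0 := x / (2 * gscale om c 0)).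
  assert (Hv0 : 0 <= v0) by (apply Rdiv_le_0_compat; lra).
  assert (Hsn : filterlim (fun p => profile_sn om c p x ^ 2)
                  (at_right 0) (locally (sin (gd v0) ^ 2))).
  { apply flim_sqr, (flim_continuous sin); [apply continuous_of_ex_derive; auto_derive; exact I|].
    apply jam_tends_to_gd;
      [exact nondeg_sqrt_mod2_sqr_tends_1 | exact nondeg_sqrt_mod2_sqr_lt_1 | exact Hv0 |].
    apply flim_div; [lra | apply filterlim_const |].
    apply flim_mult; [apply filterlim_const | exact nondeg_gscale_tends]. }
  rewrite nondeg_soliton_eq. fold v0.
  apply (profile_tends om c Hadm); [| apply flim_at_right, continuous_eta3; lra | |].
  - assert (0 < beta2 om c 0) by (unfold beta2; apply Rdiv_lt_0_compat; lra).
    pose proof (pow2_ge_0 (sin (gd v0))). apply Rgt_not_eq. nra.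
  - apply flim_mult; [|exact Hsn]. rewrite <- nondeg_mod2_at_0.
    apply flim_at_right, continuous_mod2; lra.
  - apply flim_mult; [|exact Hsn]. apply flim_at_right, continuous_beta2; lra.
Qed.

End Nondegenerate.

Lemma sqr_sub_sqr_le v s : 0 <= v -> v / (1 + v) <= s <= v ->
  0 <= v ^ 2 - s ^ 2 <= v ^ 2 * (2 * v + v ^ 2).
Proof.
  intros Hv [Hs1 Hs2]. assert (0 <= v / (1 + v)) by (apply Rdiv_le_0_compat; lra).
  assert (Hlow : v ^ 2 <= (1 + v) ^ 2 * s ^ 2).
  { replace (v ^ 2) with ((1 + v) ^ 2 * (v / (1 + v)) ^ 2) by (field; lra).
    apply Rmult_le_compat_l; [apply pow2_ge_0 | apply pow_incr; lra]. }
  split; nra.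
Qed.

Section Degenerate.

Variables om c : R.
Hypotheses (Heq : om = c ^ 2 / 4) (Hc : 0 < c).
Let Hadm : admissible om c := or_intror (conj Heq Hc).

Lemma deg_eta_at_0 : eta3 om c 0 = 4 * c /\ eta1 om c 0 = 0.
Proof.
  assert (Hw : sqrt om = c / 2)
    by (rewrite Heq; replace (c ^ 2 / 4) with ((c / 2) ^ 2) by field; apply sqrt_pow2; lra).
  destruct (eta_at_0 om c Hadm) as [_ [-> ->]]. rewrite Hw. split; field.
Qed.

Lemma deg_eta3_tends : filterlim (eta3 om c) (at_right 0) (locally (4 * c)).
Proof.
  rewrite <- (proj1 deg_eta_at_0). apply flim_at_right, continuous_eta3, (Afun_0_pos om c Hadm).
Qed.

Lemma deg_eta_gap_tends :
  filterlim (fun p => eta3 om c p * (p - eta1 om c p)) (at_right 0) (locally 0).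
Proof.
  replace 0 with (eta3 om c 0 * (0 - eta1 om c 0)) at 2 by (rewrite (proj2 deg_eta_at_0); ring).
  apply (flim_at_right (fun p => eta3 om c p * (p - eta1 om c p))), continuous_eta_gap.
  apply (Afun_0_pos om c Hadm).
Qed.

Lemma deg_Lfun_eventually_gt M : at_right 0 (fun p => M < Lfun om c p).
Proof.
  pose proof PI_RGT_0. pose proof (Rle_abs M). pose proof (Rabs_pos M).
  set (r := 2 * PI / (Rabs M + 1)). assert (Hr : 0 < r) by (apply Rdiv_lt_0_compat; lra).
  assert (Hr2 : 0 < r ^ 2) by (apply pow_lt, Hr).
  generalize (filter_and _ _ (eventually_in_range om c Hadm)
    (flim_abs_lt _ _ deg_eta_gap_tends _ Hr2)).
  apply filter_imp => p [Hp Hgap]. rewrite Rminus_0_r in Hgap.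
  pose proof (eta_gap_pos om c Hadm p Hp) as Hgap0. pose proof (mod2_bounds om c Hadm p Hp).
  rewrite Rabs_right in Hgap by lra.
  unfold Lfun, gscale. set (X := eta3 om c p * (p - eta1 om c p)) in *.
  assert (HsX : 0 < sqrt X < r).
  { split; [apply sqrt_lt_R0, Hgap0|]. rewrite <- (sqrt_pow2 r) by lra. apply sqrt_lt_1_alt. lra. }
  pose proof (PI_le_ellF_mod2 om c Hadm p Hp).
  apply (Rlt_le_trans _ (2 / sqrt X * PI)).
  2: { apply Rmult_le_compat_l; [apply Rlt_le, Rdiv_lt_0_compat|]; lra. }
  assert (HM : (Rabs M + 1) * sqrt X < 2 * PI).
  { replace (2 * PI) with ((Rabs M + 1) * r) by (unfold r; field; lra).
    apply Rmult_lt_compat_l; lra. }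
  apply (Rmult_lt_reg_r (sqrt X)); [lra|].
  replace (2 / sqrt X * PI * sqrt X) with (2 * PI) by (field; lra).
  assert (M * sqrt X <= (Rabs M + 1) * sqrt X) by (apply Rmult_le_compat_r; lra). lra.
Qed.

Section DegeneratePoint.

Variable x : R.
Hypothesis Hx : 0 <= x.

Let v p := x / (2 * gscale om c p).
Let sn p := profile_sn om c p x.

Lemma deg_arg_tends : filterlim v (at_right 0) (locally 0).
Proof.
  apply (filterlim_ext_loc (fun p => x * sqrt (eta3 om c p * (p - eta1 om c p)) / 4)).
  - generalize (eventually_in_range om c Hadm). apply filter_imp => p Hp.
    pose proof (eta_gap_pos om c Hadm p Hp).
    assert (0 < sqrt (eta3 om c p * (p - eta1 om c p))) by (apply sqrt_lt_R0; lra).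
    unfold v, gscale. field. lra.
  - assert (L : filterlim (fun p => x * sqrt (eta3 om c p * (p - eta1 om c p)) / 4)
                  (at_right 0) (locally (x * sqrt 0 / 4))).
    { apply flim_div; [lra | | apply filterlim_const].
      apply flim_mult; [apply filterlim_const|].
      apply (flim_continuous sqrt); [apply continuous_sqrt | exact deg_eta_gap_tends]. }
    rewrite sqrt_0 in L. replace (x * 0 / 4) with 0 in L by field. exact L.
Qed.

Lemma deg_sn_sqr_near_arg_sqr : at_right 0 (fun p =>
  0 < p < alpha0 om c /\ 0 <= v p ^ 2 - sn p ^ 2 <= v p ^ 2 * (2 * v p + v p ^ 2)).
Proof.
  generalize (filter_and _ _ (eventually_in_range om c Hadm)
    (flim_abs_lt _ _ deg_arg_tends 1 Rlt_0_1)).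
  apply filter_imp => p [Hp Hv1]. rewrite Rminus_0_r in Hv1. apply Rabs_def2 in Hv1.
  pose proof (gscale_pos om c Hadm p Hp). pose proof (mod2_bounds om c Hadm p Hp).
  assert (0 <= v p) by (apply Rdiv_le_0_compat; lra).
  split; [exact Hp|]. apply sqr_sub_sqr_le; [lra|].
  apply sin_jam_bounds; [rewrite pow2_sqrt|]; lra.
Qed.

Lemma deg_beta2_arg_sqr_tends :
  filterlim (fun p => beta2 om c p * v p ^ 2) (at_right 0) (locally (c ^ 2 * x ^ 2)).
Proof.
  apply (filterlim_ext_loc (fun p => x ^ 2 * eta3 om c p * (eta3 om c p - p) / 16)).
  - generalize (eventually_in_range om c Hadm). apply filter_imp => p Hp.
    pose proof (eta_order om c Hadm p Hp). pose proof (gscale_pos om c Hadm p Hp).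
    unfold v, beta2. replace ((x / (2 * gscale om c p)) ^ 2) with (x ^ 2 / (4 * gscale om c p ^ 2))
      by (field; lra).
    rewrite (gscale_sqr om c Hadm p Hp). field. split; lra.
  - replace (c ^ 2 * x ^ 2) with (x ^ 2 * (4 * c) * (4 * c - 0) / 16) by field.
    apply flim_div; [lra | | apply filterlim_const].
    apply flim_mult; [apply flim_mult; [apply filterlim_const | exact deg_eta3_tends]|].
    apply flim_minus; [exact deg_eta3_tends|].
    apply (flim_at_right (fun p => p)), continuous_id.
Qed.

Lemma deg_profile_tends :
  filterlim (fun p => profile om c p x) (at_right 0) (locally (soliton om c x)).
Proof.
  pose proof deg_sn_sqr_near_arg_sqr as Hsn. pose proof deg_beta2_arg_sqr_tends as HQ.
  unfold soliton. destruct (Rlt_dec (c ^ 2 / 4) om) as [Hlt|_]; [lra|].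
  replace (4 * c / ((c * x) ^ 2 + 1)) with (4 * c * ((1 - 0) / (1 + c ^ 2 * x ^ 2)))
    by (field; nra).
  apply (profile_tends om c Hadm); [nra | exact deg_eta3_tends | |].
  - change (filterlim (fun p => mod2 om c p * sn p ^ 2) (at_right 0) (locally 0)).
    assert (Hv2 := flim_sqr _ _ deg_arg_tends). replace (0 ^ 2) with 0 in Hv2 by ring.
    apply (flim_squeeze _ (fun p => v p ^ 2)); [|exact Hv2].
    generalize Hsn. apply filter_imp => p [Hp Hs].
    pose proof (mod2_bounds om c Hadm p Hp). pose proof (pow2_ge_0 (sn p)).
    rewrite Rminus_0_r, Rabs_right by nra. nra.
  - change (filterlim (fun p => beta2 om c p * sn p ^ 2) (at_right 0) (locally (c ^ 2 * x ^ 2))).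
    apply (flim_squeeze _ (fun p => beta2 om c p * v p ^ 2 * (2 * v p + v p ^ 2)
                                     + Rabs (beta2 om c p * v p ^ 2 - c ^ 2 * x ^ 2))).
    + generalize Hsn. apply filter_imp => p [Hp Hs].
      pose proof (beta2_pos om c Hadm p Hp).
      assert (0 <= beta2 om c p * (v p ^ 2 - sn p ^ 2)) by (apply Rmult_le_pos; lra).
      assert (beta2 om c p * (v p ^ 2 - sn p ^ 2) <= beta2 om c p * (v p ^ 2 * (2 * v p + v p ^ 2)))
        by (apply Rmult_le_compat_l; lra).
      pose proof (Rabs_triang (beta2 om c p * sn p ^ 2 - beta2 om c p * v p ^ 2)
                    (beta2 om c p * v p ^ 2 - c ^ 2 * x ^ 2)) as Htri.
      replace (beta2 om c p * sn p ^ 2 - beta2 om c p * v p ^ 2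
               + (beta2 om c p * v p ^ 2 - c ^ 2 * x ^ 2))
        with (beta2 om c p * sn p ^ 2 - c ^ 2 * x ^ 2) in Htri by ring.
      rewrite (Rabs_left1 (beta2 om c p * sn p ^ 2 - beta2 om c p * v p ^ 2)) in Htri by lra.
      lra.
    + replace 0 with (c ^ 2 * x ^ 2 * (2 * 0 + 0 ^ 2) + Rabs (c ^ 2 * x ^ 2 - c ^ 2 * x ^ 2)) at 2
        by (rewrite Rminus_eq_0, Rabs_R0; ring).
      pose proof deg_arg_tends as Hv.
      apply flim_plus.
      * apply flim_mult; [exact HQ|].
        apply flim_plus; [|exact (flim_sqr _ _ Hv)].
        apply flim_mult; [apply filterlim_const | exact Hv].
      * apply (flim_continuous Rabs); [apply continuous_Rabs|].
        apply flim_minus; [exact HQ | apply filterlim_const].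
Qed.

End DegeneratePoint.

End Degenerate.

(** * The parameter of a given half-period *)

Definition pL om c L := epsilon (inhabits 0) (fun p => 0 < p < alpha0 om c /\ Lfun om c p = L).

Section HalfPeriod.

Variables om c : R.
Hypothesis Hadm : admissible om c.

Lemma Lfun_eventually_gt M : at_right 0 (fun p => M < Lfun om c p).
Proof.
  destruct Hadm as [Hlt|[Heq Hc]].
  - apply nondeg_Lfun_eventually_gt, Hlt.
  - apply deg_Lfun_eventually_gt; assumption.
Qed.

Lemma eventually_Lfun_lt L : L0 om c < L ->
  at_left (alpha0 om c) (fun p => 0 < p < alpha0 om c /\ Lfun om c p < L).
Proof.
  intros HL. destruct (alpha0_facts om c Hadm) as [[Ha _] _].
  assert (HA := Afun_alpha0 om c Hadm). pose proof (sqrt_om_facts om c Hadm) as [Hw0 [Hw _]].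
  assert (0 < Afun om c (alpha0 om c)) by (rewrite HA, <- Hw; pose proof (pow2_ge_0 c); nra).
  assert (HU : continuous (fun p => 2 * PI / sqrt (p * sqrt (Afun om c p))) (alpha0 om c)).
  { assert (ex_derive (Afun om c) (alpha0 om c)) by (unfold Afun; auto_derive; exact I).
    assert (0 < alpha0 om c * sqrt (Afun om c (alpha0 om c)))
      by (apply Rmult_lt_0_compat; [lra | apply sqrt_lt_R0; lra]).
    apply continuous_of_ex_derive. auto_derive.
    split_conj; auto; try lra.
    apply Rgt_not_eq, sqrt_lt_R0. lra. }
  assert (HL0 : 0 < L - L0 om c) by lra.
  generalize (filter_and _ _ (at_left_interval 0 _ Ha)
    (flim_abs_lt _ _ (flim_at_left _ _ HU) _ HL0)).
  apply filter_imp => p [Hp HUp]. split; [exact Hp|].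
  apply Rabs_def2 in HUp. pose proof (Lfun_le om c Hadm p Hp). unfold L0 in *. cbv beta in *. lra.
Qed.

Lemma Lfun_surj L : L0 om c < L -> exists p, 0 < p < alpha0 om c /\ Lfun om c p = L.
Proof.
  intros HL.
  destruct (filter_ex _ (eventually_Lfun_lt L HL)) as [p2 [Hp2 HL2]].
  destruct (filter_ex _ (filter_and _ _ (at_right_interval 0 p2 (proj1 Hp2))
                                       (Lfun_eventually_gt L)))
    as [p1 [Hp1 HL1]].
  destruct (IVT_interv (fun p => L - Lfun om c p) p1 p2) as [p [Hp Hzero]]; [| lra | lra | lra |].
  - intros q Hq. apply continuity_pt_filterlim.
    apply flim_minus; [apply filterlim_const | apply Lfun_continuous; [exact Hadm | lra]].
  - exists p. split; lra.
Qed.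

Lemma pL_spec L : L0 om c < L -> 0 < pL om c L < alpha0 om c /\ Lfun om c (pL om c L) = L.
Proof. intros HL. unfold pL. apply epsilon_spec, Lfun_surj, HL. Qed.

Lemma pL_le L : L0 om c < L -> pL om c L <= 4 * PI ^ 2 / (L ^ 2 * sqrt (Afun_min om c)).
Proof.
  intros HL. destruct (pL_spec L HL) as [Hp HLp]. set (p := pL om c L) in *.
  pose proof (Lfun_le om c Hadm p Hp) as Hub. pose proof (Lfun_pos om c Hadm p Hp).
  rewrite HLp in *. pose proof PI_RGT_0.
  pose proof (Afun_ge_min om c Hadm p ltac:(lra)). pose proof (Afun_min_pos om c Hadm).
  set (A := Afun om c p) in *. set (m := Afun_min om c) in *.
  assert (sqrt m <= sqrt A) by (apply sqrt_le_1_alt; lra).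
  assert (0 < sqrt m) by (apply sqrt_lt_R0; lra).
  assert (HpA : 0 < p * sqrt A) by (apply Rmult_lt_0_compat; lra).
  assert (0 < sqrt (p * sqrt A)) by (apply sqrt_lt_R0, HpA).
  assert (HLq : L * sqrt (p * sqrt A) <= 2 * PI).
  { apply (Rmult_le_compat_r (sqrt (p * sqrt A))) in Hub; [|lra].
    replace (2 * PI / sqrt (p * sqrt A) * sqrt (p * sqrt A)) with (2 * PI) in Hub by (field; lra).
    exact Hub. }
  assert (Hq2 := pow2_sqrt (p * sqrt A) (Rlt_le _ _ HpA)).
  assert (L ^ 2 * (p * sqrt A) <= 4 * PI ^ 2).
  { rewrite <- Hq2, <- Rpow_mult_distr. replace (4 * PI ^ 2) with ((2 * PI) ^ 2) by ring.
    apply pow_incr. split; [|exact HLq]. apply Rmult_le_pos; lra. }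
  assert (0 < L ^ 2) by (apply pow_lt; lra).
  assert (L ^ 2 * p * sqrt m <= L ^ 2 * p * sqrt A)
    by (apply Rmult_le_compat_l; [apply Rmult_le_pos|]; lra).
  apply (Rmult_le_reg_r (L ^ 2 * sqrt m)); [apply Rmult_lt_0_compat; lra|].
  replace (4 * PI ^ 2 / (L ^ 2 * sqrt m) * (L ^ 2 * sqrt m)) with (4 * PI ^ 2) by (field; lra).
  lra.
Qed.

Lemma pL_tends_0 : filterlim (pL om c) (Rbar_locally p_infty) (at_right 0).
Proof.
  intros P [eps HP]. pose proof (cond_pos eps). pose proof PI_RGT_0.
  pose proof (Afun_min_pos om c Hadm). assert (0 < sqrt (Afun_min om c)) by (apply sqrt_lt_R0; lra).
  set (C := 4 * PI ^ 2 / sqrt (Afun_min om c)).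
  assert (0 < C) by (apply Rdiv_lt_0_compat; nra).
  exists (Rmax (L0 om c) (Rmax 1 (C / eps))). intros L HL.
  pose proof (Rmax_l (L0 om c) (Rmax 1 (C / eps))).
  pose proof (Rmax_r (L0 om c) (Rmax 1 (C / eps))).
  pose proof (Rmax_l 1 (C / eps)). pose proof (Rmax_r 1 (C / eps)).
  simpl in HL. assert (HL0 : L0 om c < L) by lra.
  assert (HL1 : 1 < L) by lra. assert (HCL : C / eps < L) by lra.
  destruct (pL_spec L HL0) as [Hp _]. pose proof (pL_le L HL0) as Hle.
  apply HP; [|lra].
  unfold ball; simpl; unfold AbsRing_ball, abs, minus, plus, opp; simpl.
  rewrite Ropp_0, Rplus_0_r, Rabs_right by lra.
  replace (4 * PI ^ 2 / (L ^ 2 * sqrt (Afun_min om c))) with (C / L / L) in Hle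
    by (unfold C; field; lra).
  assert (C / L < eps).
  { apply (Rmult_lt_reg_r L); [lra|]. replace (C / L * L) with C by (field; lra).
    apply (Rmult_lt_compat_r eps) in HCL; [|lra].
    replace (C / eps * eps) with C in HCL by (field; lra). nra. }
  assert (C / L / L <= C / L).
  { unfold Rdiv at 1. rewrite <- (Rmult_1_r (C / L)) at 2. apply Rmult_le_compat_l.
    - apply Rlt_le, Rdiv_lt_0_compat; lra.
    - rewrite <- Rinv_1. apply Rinv_le_contravar; lra. }
  lra.
Qed.

Lemma profile_tends_to_soliton x :
  filterlim (fun p => profile om c p x) (at_right 0) (locally (soliton om c x)).
Proof.
  assert (Hpos : forall y, 0 <= y ->
            filterlim (fun p => profile om c p y) (at_right 0) (locally (soliton om c y))).
  { intros y Hy. destruct Hadm as [Hlt|[Heq Hc]].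
    - apply nondeg_profile_tends; assumption.
    - apply deg_profile_tends; assumption. }
  destruct (Rle_dec 0 x) as [Hx|Hx]; [apply Hpos, Hx|].
  rewrite <- soliton_even. apply (filterlim_ext_loc (fun p => profile om c p (- x))).
  - generalize (eventually_in_range om c Hadm). apply filter_imp => p Hp.
    apply (profile_bump om c Hadm p Hp).
  - apply Hpos. lra.
Qed.

End HalfPeriod.

Theorem theorem1p1 (om c : R) :
  (c ^ 2 / 4 < om \/ (om = c ^ 2 / 4 /\ 0 < c)) ->
  exists PhiL : R -> R -> R,
    (forall L, L0 om c < L ->
       pos_single_bump_solution om c L (PhiL L) /\
       exists eta3 g k beta : R,
         0 < eta3 /\ 0 < g /\ 0 < k < 1 /\
         forall x, - L <= x <= L ->
           (PhiL L x) ^ 2 =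
             eta3 * (jdn (x / (2 * g)) k) ^ 2 /
               (1 + beta ^ 2 * (jsn (x / (2 * g)) k) ^ 2)) /\
    (forall x, is_lim (fun L => PhiL L x) p_infty (soliton om c x)).
Proof.
  intros Hadm. change (admissible om c) in Hadm.
  exists (fun L => profile om c (pL om c L)). split.
  - intros L HL. destruct (pL_spec om c Hadm L HL) as [Hp HLp].
    set (p := pL om c L) in *.
    pose proof (profile_bump om c Hadm p Hp) as Hbump. rewrite HLp in Hbump.
    split; [exact Hbump|].
    pose proof (mod2_bounds om c Hadm p Hp).
    exists (eta3 om c p), (gscale om c p), (sqrt (mod2 om c p)), (sqrt (beta2 om c p)).
    split; [apply eta3_pos; assumption|]. split; [apply gscale_pos; assumption|].
    split.
    + split; [apply sqrt_lt_R0; lra|]. rewrite <- sqrt_1. apply sqrt_lt_1_alt. lra.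
    + intros x _. apply elliptic_profile_sqr, Rlt_le, eta3_pos; assumption.
  - intros x. exact (filterlim_comp _ _ _ (pL om c) (fun p => profile om c p x) _ _ _
      (pL_tends_0 om c Hadm) (profile_tends_to_soliton om c Hadm x)).
Qed.
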